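(* For $\boldsymbol\ell\in\{0,\dots,N-1\}^d$ let $$\psi_{\boldsymbol\ell}=\frac1{\sqrt{\|G_{\boldsymbol\ell}\|_1}}\sum_{\mathbf{m}\in\mathbb{Z}^d}G[\mathbf{m}N+\boldsymbol\ell]\,\phi_{\mathbf{m}N+\boldsymbol\ell}.$$ Then $\mathcal{T}_K^{N,d}\psi_{\boldsymbol\ell}=\|G_{\boldsymbol\ell}\|_1\psi_{\boldsymbol\ell}$, $\|\psi_{\boldsymbol\ell}\|_{\mathcal{H}}=1$, $\|\psi_{\boldsymbol\ell}\|=\frac{\|G_{\boldsymbol\ell}\|}{\sqrt{\|G_{\boldsymbol\ell}\|_1}}$, and $\langle\psi_{\boldsymbol\ell},\psi_{\mathbf{k}}\rangle=0$ for $\mathbf{k}\ne\boldsymbol\ell$.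
   Context: Let $\mathbb{T}=[-\pi,\pi)$, $j=\sqrt{-1}$, $\phi_{\mathbf{k}}(\mathbf{x})=e^{j\langle\mathbf{k},\mathbf{x}\rangle}$ for $\mathbf{k}\in\mathbb{Z}^d$, $\mu$ uniform probability measure on $\mathbb{T}^d$, $\langle\cdot,\cdot\rangle$ and $\|\cdot\|$ the $L^2_\mu$ inner product and norm. $K(\mathbf{x},\mathbf{x}')=g(M((\mathbf{x}-\mathbf{x}')\bmod\mathbb{T}^d))$ is a positive definite kernel with RKHS $\mathcal{H}$ (coordinatewise $\theta\bmod\mathbb{T}:=((\theta+\pi)\bmod2\pi)-\pi$), Fourier coefficients $G[\mathbf{k}]=(2\pi)^{-d}\int_{\mathbb{T}^d}g(M\boldsymbol\theta)e^{-j\langle\mathbf{k},\boldsymbol\theta\rangle}d\boldsymbol\theta\ge0$, $\sum G[\mathbf{k}]<\infty$, and $\|f\|_{\mathcal{H}}^2=\sum_{\mathbf{k}}|\langle f,\phi_{\mathbf{k}}\rangle|^2/G[\mathbf{k}]$. For even $N$, grid points $\mathbf{x}_{\mathbf{p}}$, $\mathbf{p}\in\{0,\dots,N-1\}^d$, $(\mathbf{x}_{\mathbf{p}})_i=\frac{2\pi}{N}p_i-\pi$, with invertible kernel matrix. $\mathcal{T}_K^{N,d}f(\mathbf{x})=N^{-d}\sum_{\mathbf{p}}K(\mathbf{x},\mathbf{x}_{\mathbf{p}})f(\mathbf{x}_{\mathbf{p}})$. $\|G_{\boldsymbol\ell}\|_1=\sum_{\mathbf{m}}|G[\mathbf{m}N+\boldsymbol\ell]|$,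 $\|G_{\boldsymbol\ell}\|^2=\sum_{\mathbf{m}}|G[\mathbf{m}N+\boldsymbol\ell]|^2$. *)

(* Conventions:
   - a point of R^d / T^d is a function  nat -> R  (only coordinates i < d matter);
   - a frequency in Z^d is a function  nat -> Z ; sums over Z^d only ever evaluate
     the summand at vectors vanishing at coordinates >= d;
   - a grid index p in {0..N-1}^d is a function  nat -> nat  with p i < N for i < d
     and p i = 0 for i >= d. *)
From Stdlib Require Import Reals Lra Lia.
From Coquelicot Require Import Coquelicot.
Open Scope R_scope.

Fixpoint rsum (n : nat) (f : nat -> R) : R :=
  match n with O => 0 | S n' => rsum n' f + f n' end.

Definition updR (x : nat -> R) (i : nat) (t : R) : nat -> R :=
  fun j => if Nat.eqb j i then t else x j.
Definition updZ (k : nat -> Z) (i : nat) (t : Z) : nat -> Z :=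
  fun j => if Nat.eqb j i then t else k j.
Definition updN (p : nat -> nat) (i : nat) (t : nat) : nat -> nat :=
  fun j => if Nat.eqb j i then t else p j.

Definition dotZ (d : nat) (k : nat -> Z) (x : nat -> R) : R :=
  rsum d (fun i => IZR (k i) * x i).

Definition cexpi (t : R) : C := (cos t, sin t).

Definition phi (d : nat) (k : nat -> Z) (x : nat -> R) : C := cexpi (dotZ d k x).

Fixpoint boxsum (d n : nat) (F : (nat -> Z) -> R) : R :=
  match d with
  | O => F (fun _ => 0%Z)
  | S d' => rsum (2 * n + 1)
              (fun i => boxsum d' n (fun k => F (updZ k d' (Z.of_nat i - Z.of_nat n)%Z)))
  end.

(* sum over Z^d (limit of the box partial sums; all series in the statement are
   absolutely convergent, so this is the unordered sum) *)
Definition RsumZd (d : nat) (F : (nat -> Z) -> R) : R :=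
  Lim_seq (fun n => boxsum d n F).
Definition CsumZd (d : nat) (F : (nat -> Z) -> C) : C :=
  (RsumZd d (fun k => Re (F k)), RsumZd d (fun k => Im (F k))).

(* integral w.r.t. the uniform probability measure mu on T^d = [-pi,pi)^d,
   written as an iterated (normalized) integral *)
Fixpoint tint (d : nat) (f : (nat -> R) -> R) : R :=
  match d with
  | O => f (fun _ => 0)
  | S d' => / (2 * PI) * RInt (fun t => tint d' (fun x => f (updR x d' t))) (- PI) PI
  end.
Definition Ctint (d : nat) (f : (nat -> R) -> C) : C :=
  (tint d (fun x => Re (f x)), tint d (fun x => Im (f x))).

Definition L2ip (d : nat) (f h : (nat -> R) -> C) : C :=
  Ctint d (fun x => Cmult (f x) (Cconj (h x))).
Definition L2norm (d : nat) (f : (nat -> R) -> C) : R :=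
  sqrt (tint d (fun x => (Cmod (f x)) ^ 2)).

(* RKHS norm  ||f||_H^2 = sum_k |<f,phi_k>|^2 / G[k]   (with x / 0 = 0) *)
Definition Hnorm (d : nat) (G : (nat -> Z) -> R) (f : (nat -> R) -> C) : R :=
  sqrt (RsumZd d (fun k => (Cmod (L2ip d f (phi d k))) ^ 2 / G k)).

Definition rmod (a b : R) : R := a - b * IZR (Int_part (a / b)).
Definition tmod (d : nat) (th : nat -> R) : nat -> R :=
  fun i => if Nat.ltb i d then rmod (th i + PI) (2 * PI) - PI else 0.

Definition matvec (d : nat) (M : nat -> nat -> R) (v : nat -> R) : nat -> R :=
  fun i => if Nat.ltb i d then rsum d (fun j => M i j * v j) else 0.

Definition kern (d : nat) (g : (nat -> R) -> R) (M : nat -> nat -> R)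
  (x y : nat -> R) : R :=
  g (matvec d M (tmod d (fun i => x i - y i))).

Definition in_torus (d : nat) (th : nat -> R) : Prop :=
  forall i, (i < d)%nat -> - PI <= th i < PI.

Definition in_grid (d N : nat) (p : nat -> nat) : Prop :=
  (forall i, (i < d)%nat -> (p i < N)%nat) /\ (forall i, (d <= i)%nat -> p i = 0%nat).
Definition gridpt (N : nat) (p : nat -> nat) : nat -> R :=
  fun i => 2 * PI / INR N * INR (p i) - PI.

Fixpoint gridsum (d N : nat) (F : (nat -> nat) -> R) : R :=
  match d with
  | O => F (fun _ => 0%nat)
  | S d' => rsum N (fun t => gridsum d' N (fun p => F (updN p d' t)))
  end.
Definition Cgridsum (d N : nat) (F : (nat -> nat) -> C) : C :=
  (gridsum d N (fun p => Re (F p)), gridsum d N (fun p => Im (F p))).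

(* the kernel matrix [K(x_p, x_q)]_{p,q} is invertible (square matrix: trivial kernel) *)
Definition kernel_matrix_invertible (d N : nat) (K : (nat -> R) -> (nat -> R) -> R) : Prop :=
  forall c : (nat -> nat) -> R,
    (forall p, in_grid d N p ->
       gridsum d N (fun q => K (gridpt N p) (gridpt N q) * c q) = 0) ->
    forall p, in_grid d N p -> c p = 0.

Definition TK (d N : nat) (K : (nat -> R) -> (nat -> R) -> R)
  (f : (nat -> R) -> C) (x : nat -> R) : C :=
  Cmult (RtoC (/ (INR N ^ d)))
        (Cgridsum d N (fun p => Cmult (RtoC (K x (gridpt N p))) (f (gridpt N p)))).

Definition mNl (N : nat) (m : nat -> Z) (l : nat -> nat) : nat -> Z :=
  fun i => (m i * Z.of_nat N + Z.of_nat (l i))%Z.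

Definition Gl1 (d N : nat) (G : (nat -> Z) -> R) (l : nat -> nat) : R :=
  RsumZd d (fun m => Rabs (G (mNl N m l))).
Definition Gl2 (d N : nat) (G : (nat -> Z) -> R) (l : nat -> nat) : R :=
  sqrt (RsumZd d (fun m => (Rabs (G (mNl N m l))) ^ 2)).

Definition psi (d N : nat) (G : (nat -> Z) -> R) (l : nat -> nat) (x : nat -> R) : C :=
  Cmult (RtoC (/ sqrt (Gl1 d N G l)))
        (CsumZd d (fun m => Cmult (RtoC (G (mNl N m l))) (phi d (mNl N m l) x))).

(* Write c = ||G_l||_1^{-1/2} and x_p for the grid points.  As N is even, every frequency
   mN + l aliases to l on the grid, so psi_l = c^{-1} phi_l there.  Expanding
   K(x, x_p) = sum_k G[k] phi_k(x - x_p), the discrete orthogonality relation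
   N^{-d} sum_p phi_{l-k}(x_p) = [k = l mod N] keeps exactly the frequencies k = mN + l, which
   gives T psi_l = ||G_l||_1 psi_l.  Integrating term by term, <psi_l, phi_k> is c G[k] for
   k = l mod N and 0 otherwise; this gives the RKHS norm, and expanding psi_k as well gives
   the L^2 norm and the orthogonality.  The RKHS norm also needs ||G_l||_1 > 0, which is
   where the invertibility of the kernel matrix enters.  Sums over Z^d are limits of box
   sums; the reindexing k = mN + l squeezes the box of radius n in m between the boxes of
   radii nN and nN + N in k. *)

From Stdlib Require Import Reals Lra Lia ZArith FunctionalExtensionality.
From Coquelicot Require Import Coquelicot.
Open Scope R_scope.

Lemma rsum_ext n f g : (forall i, (i < n)%nat -> f i = g i) -> rsum n f = rsum n g.
Proof.
  induction n as [|n IH]; intros H; simpl; auto.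
  rewrite IH by (intros; apply H; lia). rewrite H by lia. reflexivity.
Qed.

Lemma rsum_S n f : rsum (S n) f = rsum n f + f n.
Proof. reflexivity. Qed.

Lemma rsum_plus n f g : rsum n (fun i => f i + g i) = rsum n f + rsum n g.
Proof. induction n; simpl; [lra|]. rewrite IHn; lra. Qed.

Lemma rsum_scal n a f : rsum n (fun i => a * f i) = a * rsum n f.
Proof. induction n; simpl; [lra|]. rewrite IHn; lra. Qed.

Lemma rsum_const n c : rsum n (fun _ => c) = INR n * c.
Proof. induction n; simpl rsum; [simpl; ring|]. rewrite IHn, S_INR; ring. Qed.

Lemma rsum_0 n : rsum n (fun _ => 0) = 0.
Proof. rewrite rsum_const; ring. Qed.

Lemma rsum_le n f g : (forall i, (i < n)%nat -> f i <= g i) -> rsum n f <= rsum n g.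
Proof.
  induction n as [|n IH]; intros H; simpl; [lra|].
  assert (f n <= g n) by (apply H; lia).
  assert (rsum n f <= rsum n g) by (apply IH; intros; apply H; lia).
  lra.
Qed.

Lemma rsum_nonneg n f : (forall i, (i < n)%nat -> 0 <= f i) -> 0 <= rsum n f.
Proof. intros H. rewrite <- (rsum_0 n). apply rsum_le; auto. Qed.

Lemma rsum_abs_le n f g : (forall i, (i < n)%nat -> Rabs (f i) <= g i) -> Rabs (rsum n f) <= rsum n g.
Proof.
  induction n as [|n IH]; intros H; simpl.
  - rewrite Rabs_R0; lra.
  - eapply Rle_trans; [apply Rabs_triang|].
    assert (Rabs (f n) <= g n) by (apply H; lia).
    assert (Rabs (rsum n f) <= rsum n g) by (apply IH; intros; apply H; lia).
    lra.
Qed.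

Lemma rsum_add_len a b f : rsum (a + b) f = rsum a f + rsum b (fun i => f (a + i)%nat).
Proof.
  induction b as [|b IH]; simpl; [rewrite Nat.add_0_r; lra|].
  rewrite Nat.add_succ_r; simpl. rewrite IH; lra.
Qed.

Lemma rsum_Sl n f : rsum (S n) f = f O + rsum n (fun i => f (S i)).
Proof. rewrite <- (Nat.add_1_l n) at 1. rewrite rsum_add_len. simpl. lra. Qed.

Lemma rsum_mul_len q N f : rsum (q * N) f = rsum q (fun j => rsum N (fun r => f (j * N + r)%nat)).
Proof. induction q; simpl; auto. rewrite Nat.add_comm, rsum_add_len, IHq. auto. Qed.

Lemma rsum_indicator n i0 c : (i0 < n)%nat -> rsum n (fun i => if Nat.eqb i i0 then c else 0) = c.
Proof.
  induction n as [|n IH]; intros H; [lia|]. simpl. destruct (Nat.eqb_spec n i0).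
  - subst. rewrite (rsum_ext _ _ (fun _ => 0)), rsum_0; [lra|].
    intros i Hi. destruct (Nat.eqb_spec i i0); [lia|auto].
  - rewrite IH by lia. lra.
Qed.

Lemma rsum_telescope n (g : nat -> R) : rsum n (fun t => g (S t) - g t) = g n - g O.
Proof. induction n; simpl rsum; [ring|]. rewrite IHn; ring. Qed.

Lemma is_lim_seq_rsum n (u : nat -> nat -> R) (v : nat -> R) :
  (forall i, is_lim_seq (fun m => u m i) (v i)) -> is_lim_seq (fun m => rsum n (u m)) (rsum n v).
Proof. intros H. induction n; simpl rsum; [apply is_lim_seq_const|]. apply is_lim_seq_plus'; auto. Qed.

Lemma is_lim_seq_Rle (u v : nat -> R) (a b : R) :
  (forall n, u n <= v n) -> is_lim_seq u a -> is_lim_seq v b -> a <= b.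
Proof. exact (is_lim_seq_le u v a b). Qed.

Lemma is_lim_seq_Req (u : nat -> R) (a b : R) : is_lim_seq u a -> is_lim_seq u b -> a = b.
Proof. intros Ha Hb. apply is_lim_seq_unique in Ha, Hb. rewrite Ha in Hb. injection Hb; auto. Qed.

Lemma updR_same x i t : updR x i t i = t.
Proof. unfold updR. rewrite Nat.eqb_refl. auto. Qed.

Lemma updR_other x i t j : j <> i -> updR x i t j = x j.
Proof. unfold updR. intros. destruct (Nat.eqb_spec j i); [lia|auto]. Qed.

Lemma updZ_same k i t : updZ k i t i = t.
Proof. unfold updZ. rewrite Nat.eqb_refl. auto. Qed.

Lemma updZ_other k i t j : j <> i -> updZ k i t j = k j.
Proof. unfold updZ. intros. destruct (Nat.eqb_spec j i); [lia|auto]. Qed.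

Lemma dotZ_ext d k k' x : (forall i, (i < d)%nat -> k i = k' i) -> dotZ d k x = dotZ d k' x.
Proof. intros H. apply rsum_ext. intros i Hi. rewrite H; auto. Qed.

Lemma dotZ_updR d k x j t : (d <= j)%nat -> dotZ d k (updR x j t) = dotZ d k x.
Proof. intros H. apply rsum_ext. intros i Hi. rewrite updR_other by lia. auto. Qed.

Lemma dotZ_S_updR d k x t : dotZ (S d) k (updR x d t) = dotZ d k x + IZR (k d) * t.
Proof.
  unfold dotZ. rewrite rsum_S. fold (dotZ d k (updR x d t)).
  rewrite dotZ_updR, updR_same by lia. auto.
Qed.

Lemma dotZ_minus_l d (k1 k2 : nat -> Z) x :
  dotZ d (fun i => (k1 i - k2 i)%Z) x = dotZ d k1 x - dotZ d k2 x.
Proof. unfold dotZ. induction d; simpl rsum; [ring|]. rewrite IHd, minus_IZR. ring. Qed.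

Lemma dotZ_minus_r d k x y : dotZ d k (fun i => x i - y i) = dotZ d k x - dotZ d k y.
Proof. unfold dotZ. induction d; simpl rsum; [ring|]. rewrite IHd. ring. Qed.

Lemma sin_IZR_PI (z : Z) : sin (IZR z * PI) = 0.
Proof. apply sin_eq_0_1. exists z; auto. Qed.

Lemma cos_plus_2kPI x (z : Z) : cos (x + 2 * PI * IZR z) = cos x.
Proof.
  replace (2 * PI * IZR z) with (2 * (IZR z * PI)) by ring.
  rewrite cos_plus, cos_2a_sin, sin_2a, sin_IZR_PI. ring.
Qed.

Lemma sin_plus_2kPI x (z : Z) : sin (x + 2 * PI * IZR z) = sin x.
Proof.
  replace (2 * PI * IZR z) with (2 * (IZR z * PI)) by ring.
  rewrite sin_plus, cos_2a_sin, sin_2a, sin_IZR_PI. ring.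
Qed.

Lemma cos_minus_PI2 t : cos (t + - (PI / 2)) = sin t.
Proof. rewrite cos_plus, cos_neg, sin_neg, cos_PI2, sin_PI2. ring. Qed.

Lemma Rabs_cos_le t : Rabs (cos t) <= 1.
Proof. apply Rabs_le. pose proof (COS_bound t). lra. Qed.

Lemma Rabs_sin_le t : Rabs (sin t) <= 1.
Proof. apply Rabs_le. pose proof (SIN_bound t). lra. Qed.

Lemma Rabs_scale_le c u : 0 <= c -> Rabs u <= 1 -> Rabs (c * u) <= c.
Proof.
  intros Hc Hu. rewrite Rabs_mult, (Rabs_pos_eq c Hc).
  apply Rle_trans with (c * 1); [apply Rmult_le_compat_l|]; lra.
Qed.

Lemma Cmult_fst z w : fst (Cmult z w) = fst z * fst w - snd z * snd w.
Proof. reflexivity. Qed.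

Lemma Cmult_snd z w : snd (Cmult z w) = fst z * snd w + snd z * fst w.
Proof. reflexivity. Qed.

Lemma Rinv_sqrt_nonneg x : 0 <= / sqrt x.
Proof.
  destruct (Req_dec (sqrt x) 0) as [E|E]; [rewrite E, Rinv_0; lra|].
  apply Rlt_le, Rinv_0_lt_compat. pose proof (sqrt_pos x). lra.
Qed.

(** * Sums over Z^d *)

Definition supported_below (d : nat) (k : nat -> Z) := forall i, (d <= i)%nat -> k i = 0%Z.

Lemma boxsum_S d n F : boxsum (S d) n F = rsum (2 * n + 1)
  (fun i => boxsum d n (fun k => F (updZ k d (Z.of_nat i - Z.of_nat n)%Z))).
Proof. reflexivity. Qed.

Lemma boxsum_ext d n F H : (forall k, supported_below d k -> F k = H k) -> boxsum d n F = boxsum d n H.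
Proof.
  revert F H; induction d as [|d IH]; intros F H E; simpl.
  - apply E. intros i _; auto.
  - apply rsum_ext; intros; apply IH. intros k Hk. apply E. intros j Hj.
    rewrite updZ_other by lia. apply Hk; lia.
Qed.

Lemma boxsum_plus d n F H : boxsum d n (fun k => F k + H k) = boxsum d n F + boxsum d n H.
Proof. revert F H; induction d; intros; simpl; auto. rewrite <- rsum_plus. apply rsum_ext; intros; apply IHd. Qed.

Lemma boxsum_scal d n a F : boxsum d n (fun k => a * F k) = a * boxsum d n F.
Proof. revert F; induction d; intros; simpl; auto. rewrite <- rsum_scal. apply rsum_ext; intros; apply IHd. Qed.

Lemma boxsum_minus d n F H : boxsum d n (fun k => F k - H k) = boxsum d n F - boxsum d n H.
Proof.
  rewrite (boxsum_ext d n _ (fun k => F k + (-1) * H k)) by (intros; ring).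
  rewrite boxsum_plus, boxsum_scal. ring.
Qed.

Lemma boxsum_0 d n : boxsum d n (fun _ => 0) = 0.
Proof.
  induction d; simpl; auto.
  rewrite (rsum_ext _ _ (fun _ => 0)) by (intros; apply IHd). apply rsum_0.
Qed.

Lemma boxsum_le d n F H : (forall k, F k <= H k) -> boxsum d n F <= boxsum d n H.
Proof. revert F H; induction d; intros F H E; simpl; auto. apply rsum_le; intros; apply IHd; auto. Qed.

Lemma boxsum_nonneg d n F : (forall k, 0 <= F k) -> 0 <= boxsum d n F.
Proof. intros. rewrite <- (boxsum_0 d n). apply boxsum_le; auto. Qed.

Lemma boxsum_abs_le d n F A : (forall k, Rabs (F k) <= A k) -> Rabs (boxsum d n F) <= boxsum d n A.
Proof. revert F A; induction d; intros F A E; simpl; auto. apply rsum_abs_le; intros; apply IHd; auto. Qed.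

Lemma rsum_centered_S n (h : Z -> R) :
  rsum (2 * S n + 1) (fun i => h (Z.of_nat i - Z.of_nat (S n))%Z) =
  h (- Z.of_nat (S n))%Z + rsum (2 * n + 1) (fun i => h (Z.of_nat i - Z.of_nat n)%Z) + h (Z.of_nat (S n)).
Proof.
  replace (2 * S n + 1)%nat with (S (S (2 * n + 1))) by lia.
  rewrite rsum_Sl, rsum_S.
  rewrite (rsum_ext _ (fun i => h (Z.of_nat (S i) - Z.of_nat (S n))%Z) (fun i => h (Z.of_nat i - Z.of_nat n)%Z))
    by (intros; f_equal; lia).
  replace (Z.of_nat 0 - Z.of_nat (S n))%Z with (- Z.of_nat (S n))%Z by lia.
  replace (Z.of_nat (S (2 * n + 1)) - Z.of_nat (S n))%Z with (Z.of_nat (S n)) by lia.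
  lra.
Qed.

Lemma boxsum_le_S d n F : (forall k, 0 <= F k) -> boxsum d n F <= boxsum d (S n) F.
Proof.
  revert F; induction d as [|d IH]; intros F HF; [simpl; lra|]. rewrite !boxsum_S.
  rewrite (rsum_centered_S n (fun v => boxsum d (S n) (fun k => F (updZ k d v)))).
  match goal with |- _ <= ?a + _ + ?c =>
    assert (0 <= a) by (apply boxsum_nonneg; auto); assert (0 <= c) by (apply boxsum_nonneg; auto) end.
  assert (rsum (2 * n + 1) (fun i => boxsum d n (fun k => F (updZ k d (Z.of_nat i - Z.of_nat n)))) <=
          rsum (2 * n + 1) (fun i => boxsum d (S n) (fun k => F (updZ k d (Z.of_nat i - Z.of_nat n)))))
    by (apply rsum_le; intros; apply IH; auto).
  lra.
Qed.

Lemma boxsum_monotone d n m F : (forall k, 0 <= F k) -> (n <= m)%nat -> boxsum d n F <= boxsum d m F.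
Proof. intros HF H. induction H; [lra|]. eapply Rle_trans; [apply IHle|]. apply boxsum_le_S; auto. Qed.

Lemma boxsum_le_lim d F (L : R) : (forall k, 0 <= F k) -> is_lim_seq (fun n => boxsum d n F) L ->
  forall n, boxsum d n F <= L.
Proof. intros HF HL. apply is_lim_seq_incr_compare; auto. intros; apply boxsum_le_S; auto. Qed.

Lemma RsumZd_unique d F (L : R) : is_lim_seq (fun n => boxsum d n F) L -> RsumZd d F = L.
Proof. intros H. unfold RsumZd. rewrite (is_lim_seq_unique _ _ H). auto. Qed.

Lemma RsumZd_ext d F H : (forall k, F k = H k) -> RsumZd d F = RsumZd d H.
Proof. intros E. replace F with H; auto. symmetry; apply functional_extensionality; auto. Qed.

Lemma RsumZd_0 d : RsumZd d (fun _ => 0) = 0.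
Proof.
  apply RsumZd_unique. apply (is_lim_seq_ext (fun _ => 0)); [|apply is_lim_seq_const].
  intros; rewrite boxsum_0; auto.
Qed.

(* Also when the box sums diverge, since [RsumZd] is then 0 on both sides. *)
Lemma RsumZd_scal d a F : RsumZd d (fun k => a * F k) = a * RsumZd d F.
Proof.
  unfold RsumZd. rewrite (Lim_seq_ext _ (fun n => a * boxsum d n F)) by (intros; apply boxsum_scal).
  rewrite Lim_seq_scal_l. destruct (Lim_seq (fun n => boxsum d n F)) as [L| |]; simpl; [ring| |];
    unfold Rbar_mult, Rbar_mult'; repeat destruct Rle_dec; repeat destruct Rle_lt_or_eq_dec; simpl; ring.
Qed.

Lemma is_lim_seq_tail_le (a b : nat -> R) (La Lb : R) :
  (forall n m, (n <= m)%nat -> Rabs (a m - a n) <= b m - b n) ->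
  is_lim_seq a La -> is_lim_seq b Lb -> forall n, Rabs (a n - La) <= Lb - b n.
Proof.
  intros H Ha Hb n. rewrite Rabs_minus_sym.
  apply (is_lim_seq_Rle (fun m => Rabs (a (m + n)%nat - a n)) (fun m => b (m + n)%nat - b n)).
  - intros; apply H; lia.
  - apply (is_lim_seq_abs _ (La - a n)), is_lim_seq_minus'; [|apply is_lim_seq_const].
    apply (is_lim_seq_incr_n a n La); auto.
  - apply is_lim_seq_minus'; [|apply is_lim_seq_const]. apply (is_lim_seq_incr_n b n Lb); auto.
Qed.

Section Domination.

Variables (d : nat) (F A : (nat -> Z) -> R).
Hypothesis F_dominated : forall k, Rabs (F k) <= A k.

Let A_plus_F_nonneg k : 0 <= A k + F k.
Proof. specialize (F_dominated k). apply Rabs_le_between in F_dominated. lra. Qed.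

Let A_minus_F_nonneg k : 0 <= A k - F k.
Proof. specialize (F_dominated k). apply Rabs_le_between in F_dominated. lra. Qed.

Let A_nonneg k : 0 <= A k.
Proof. pose proof (A_plus_F_nonneg k). pose proof (A_minus_F_nonneg k). lra. Qed.

Lemma boxsum_dominated_cauchy n m : (n <= m)%nat ->
  Rabs (boxsum d m F - boxsum d n F) <= boxsum d m A - boxsum d n A.
Proof.
  intros Hnm.
  pose proof (boxsum_monotone d n m _ A_plus_F_nonneg Hnm).
  pose proof (boxsum_monotone d n m _ A_minus_F_nonneg Hnm).
  rewrite !boxsum_plus in H. rewrite !boxsum_minus in H0. apply Rabs_le_between. lra.
Qed.

(* Monotone convergence applied to the nonnegative series A + F. *)
Lemma boxsum_dominated_cvg (LA : R) : is_lim_seq (fun n => boxsum d n A) LA ->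
  exists L : R, is_lim_seq (fun n => boxsum d n F) L /\
    forall n, Rabs (boxsum d n F - L) <= LA - boxsum d n A.
Proof.
  intros HA.
  pose proof (boxsum_le_lim d A LA A_nonneg HA) as HAle.
  destruct (ex_finite_lim_seq_incr (fun n => boxsum d n (fun k => A k + F k)) (2 * LA)) as [Lu Hu].
  { intros; apply boxsum_le_S; auto. }
  { intros n. rewrite boxsum_plus. pose proof (HAle n).
    assert (boxsum d n F <= boxsum d n A)
      by (apply boxsum_le; intros k; pose proof (A_minus_F_nonneg k); lra).
    lra. }
  assert (HL : is_lim_seq (fun n => boxsum d n F) (Lu - LA)).
  { apply (is_lim_seq_ext (fun n => boxsum d n (fun k => A k + F k) - boxsum d n A)).
    - intros; rewrite boxsum_plus; ring.
    - apply is_lim_seq_minus'; auto. }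
  exists (Lu - LA). split; auto.
  apply is_lim_seq_tail_le; auto. apply boxsum_dominated_cauchy.
Qed.

Lemma is_lim_seq_RsumZd_dominated : ex_finite_lim_seq (fun n => boxsum d n A) ->
  is_lim_seq (fun n => boxsum d n F) (RsumZd d F).
Proof.
  intros [LA HA]. destruct (boxsum_dominated_cvg LA HA) as [L [HL _]].
  rewrite (RsumZd_unique _ _ _ HL). auto.
Qed.

Lemma RsumZd_abs_le (LA : R) : is_lim_seq (fun n => boxsum d n A) LA -> Rabs (RsumZd d F) <= LA.
Proof.
  intros HA. destruct (boxsum_dominated_cvg LA HA) as [L [HL _]]. rewrite (RsumZd_unique _ _ _ HL).
  apply (is_lim_seq_Rle (fun n => Rabs (boxsum d n F)) (fun n => boxsum d n A)); auto.
  - intros; apply boxsum_abs_le; auto.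
  - apply (is_lim_seq_abs _ L) in HL. auto.
Qed.

End Domination.

(** * Sums over a residue class *)

Fixpoint in_classb (d N : nat) (l : nat -> nat) (k : nat -> Z) : bool :=
  match d with
  | O => true
  | S d' => in_classb d' N l k && Z.eqb ((k d' - Z.of_nat (l d')) mod Z.of_nat N) 0
  end.

Lemma in_classb_spec d N l k :
  in_classb d N l k = true <-> forall i, (i < d)%nat -> ((k i - Z.of_nat (l i)) mod Z.of_nat N = 0)%Z.
Proof.
  induction d as [|d IH]; simpl; split; intros H; auto; [lia| |].
  - apply andb_prop in H. destruct H as [H1 H2]. intros i Hi.
    destruct (Nat.eq_dec i d); [subst; apply Z.eqb_eq; auto|]. apply IH; auto. lia.
  - rewrite (proj2 IH) by (intros; apply H; lia). rewrite (proj2 (Z.eqb_eq _ _)) by (apply H; lia). auto.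
Qed.

Lemma in_classb_false d N l k : in_classb d N l k = false ->
  exists i, (i < d)%nat /\ ((k i - Z.of_nat (l i)) mod Z.of_nat N <> 0)%Z.
Proof.
  induction d as [|d IH]; simpl; [discriminate|]. intros H. apply Bool.andb_false_iff in H as [H|H].
  - destruct (IH H) as [i [Hi Hne]]. exists i; split; auto; lia.
  - exists d. split; [lia|]. apply Z.eqb_neq; auto.
Qed.

Lemma in_classb_updZ d N l k j v : (d <= j)%nat -> in_classb d N l (updZ k j v) = in_classb d N l k.
Proof. induction d; simpl; intros; auto. rewrite IHd, updZ_other by lia. auto. Qed.

Lemma Z_mod_eqb_residue N r l j : (r < N)%nat -> (l < N)%nat ->
  Z.eqb ((Z.of_nat r + j * Z.of_nat N - Z.of_nat l) mod Z.of_nat N) 0 = Nat.eqb r l.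
Proof.
  intros Hr Hl.
  replace (Z.of_nat r + j * Z.of_nat N - Z.of_nat l)%Z with ((Z.of_nat r - Z.of_nat l) + j * Z.of_nat N)%Z by ring.
  rewrite Z.mod_add by lia.
  destruct (le_lt_dec l r).
  - rewrite Z.mod_small by lia. destruct (Nat.eqb_spec r l); apply Z.eqb_eq || apply Z.eqb_neq; lia.
  - replace (Z.of_nat r - Z.of_nat l)%Z with ((Z.of_nat r - Z.of_nat l + Z.of_nat N) + (-1) * Z.of_nat N)%Z by ring.
    rewrite Z.mod_add, Z.mod_small by lia.
    destruct (Nat.eqb_spec r l); [lia|]. apply Z.eqb_neq; lia.
Qed.

Fixpoint cubesum (d : nat) (a : Z) (L : nat) (F : (nat -> Z) -> R) : R :=
  match d with
  | O => F (fun _ => 0%Z)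
  | S d' => rsum L (fun i => cubesum d' a L (fun k => F (updZ k d' (a + Z.of_nat i)%Z)))
  end.

Lemma cubesum_0 d a L : cubesum d a L (fun _ => 0) = 0.
Proof.
  induction d; simpl; auto.
  rewrite (rsum_ext _ _ (fun _ => 0)) by (intros; apply IHd). apply rsum_0.
Qed.

Lemma cubesum_nonneg d a L F : (forall k, 0 <= F k) -> 0 <= cubesum d a L F.
Proof. revert F; induction d; intros F HF; simpl; auto. apply rsum_nonneg; intros; apply IHd; auto. Qed.

Lemma boxsum_cubesum d n F : boxsum d n F = cubesum d (- Z.of_nat n) (2 * n + 1) F.
Proof.
  revert F; induction d; intros; simpl; auto. apply rsum_ext; intros. rewrite IHd.
  do 3 f_equal. apply functional_extensionality; intros k. do 2 f_equal. lia.
Qed.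

Lemma cubesum_subcube d a L a' L' F : (forall k, 0 <= F k) ->
  (a' <= a)%Z -> (a + Z.of_nat L <= a' + Z.of_nat L')%Z -> cubesum d a L F <= cubesum d a' L' F.
Proof.
  revert F; induction d as [|d IH]; intros F HF H1 H2; simpl; [lra|].
  set (s := Z.to_nat (a - a')).
  set (h := fun i => cubesum d a' L' (fun k => F (updZ k d (a' + Z.of_nat i)%Z))).
  replace (rsum L' h) with (rsum (s + L + (L' - s - L)) h) by (f_equal; lia).
  rewrite !rsum_add_len. unfold h.
  assert (0 <= rsum s (fun i => cubesum d a' L' (fun k => F (updZ k d (a' + Z.of_nat i)%Z))))
    by (apply rsum_nonneg; intros; apply cubesum_nonneg; auto).
  assert (0 <= rsum (L' - s - L) (fun i => cubesum d a' L' (fun k => F (updZ k d (a' + Z.of_nat (s + L + i))%Z))))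
    by (apply rsum_nonneg; intros; apply cubesum_nonneg; auto).
  assert (rsum L (fun i => cubesum d a L (fun k => F (updZ k d (a + Z.of_nat i)%Z))) <=
          rsum L (fun i => cubesum d a' L' (fun k => F (updZ k d (a' + Z.of_nat (s + i))%Z)))).
  { apply rsum_le; intros.
    replace (fun k => F (updZ k d (a' + Z.of_nat (s + i))%Z)) with (fun k => F (updZ k d (a + Z.of_nat i)%Z))
      by (apply functional_extensionality; intros; do 2 f_equal; lia).
    apply IH; auto. }
  lra.
Qed.

(* Unlike [mNl], leaves the coordinates from d on untouched, so that it commutes with [updZ _ d]. *)
Definition mNl_below (d N : nat) (m : nat -> Z) (l : nat -> nat) : nat -> Z :=
  fun i => if Nat.ltb i d then (m i * Z.of_nat N + Z.of_nat (l i))%Z else m i.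

Lemma mNl_below_mNl d N m l : in_grid d N l -> supported_below d m -> mNl_below d N m l = mNl N m l.
Proof.
  intros [_ Hl] Hm. apply functional_extensionality; intros i. unfold mNl_below, mNl.
  destruct (Nat.ltb_spec i d); auto. rewrite Hm, Hl by lia. lia.
Qed.

Lemma updZ_mNl_below d N m l j : updZ (mNl_below d N m l) d (j * Z.of_nat N + Z.of_nat (l d))%Z
  = mNl_below (S d) N (updZ m d j) l.
Proof.
  apply functional_extensionality; intros i. unfold mNl_below, updZ.
  destruct (Nat.eqb_spec i d).
  - subst. replace (Nat.ltb d (S d)) with true by (symmetry; apply Nat.ltb_lt; lia). auto.
  - destruct (Nat.ltb_spec i d); destruct (Nat.ltb_spec i (S d)); auto; lia.
Qed.

Lemma cubesum_restrict_class d N n l F : (forall i, (i < d)%nat -> (l i < N)%nat) ->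
  cubesum d (- Z.of_nat n * Z.of_nat N) ((2 * n + 1) * N) (fun k => if in_classb d N l k then F k else 0)
  = boxsum d n (fun m => F (mNl_below d N m l)).
Proof.
  revert F; induction d as [|d IH]; intros F Hl; [reflexivity|].
  cbn [cubesum]. rewrite boxsum_S, rsum_mul_len. apply rsum_ext; intros j Hj.
  set (a := (- Z.of_nat n * Z.of_nat N)%Z).
  set (w := ((Z.of_nat j - Z.of_nat n) * Z.of_nat N + Z.of_nat (l d))%Z).
  assert (Hclass : forall r k, (r < N)%nat ->
    in_classb (S d) N l (updZ k d (a + Z.of_nat (j * N + r))) = (in_classb d N l k && Nat.eqb r (l d))%bool).
  { intros r k Hr. simpl. rewrite in_classb_updZ, updZ_same by lia. f_equal.
    rewrite <- (Z_mod_eqb_residue N r (l d) (Z.of_nat j - Z.of_nat n)) by (auto; apply Hl; lia).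
    do 3 f_equal. unfold a. lia. }
  rewrite (rsum_ext _ _ (fun r => if Nat.eqb r (l d) then
      cubesum d a ((2 * n + 1) * N) (fun k => if in_classb d N l k then F (updZ k d w) else 0) else 0)).
  - rewrite rsum_indicator by (apply Hl; lia). rewrite IH by (intros; apply Hl; lia).
    apply boxsum_ext. intros m _. unfold w. rewrite updZ_mNl_below. reflexivity.
  - intros r Hr. destruct (Nat.eqb_spec r (l d)) as [->|Hne].
    + f_equal. apply functional_extensionality; intros k. rewrite Hclass, Nat.eqb_refl by auto.
      rewrite Bool.andb_true_r. destruct (in_classb d N l k); auto. do 2 f_equal. unfold w, a. lia.
    + transitivity (cubesum d a ((2 * n + 1) * N) (fun _ => 0)); [f_equal|apply cubesum_0].
      apply functional_extensionality; intros k. rewrite Hclass by auto.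
      apply Nat.eqb_neq in Hne. rewrite Hne, Bool.andb_false_r. auto.
Qed.

Section ClassReindex.

Variables (d N : nat) (l : nat -> nat).
Hypothesis l_grid : in_grid d N l.

Lemma boxsum_mNl_squeeze F : (0 < N)%nat -> (forall k, 0 <= F k) -> forall n,
  boxsum d (n * N) (fun k => if in_classb d N l k then F k else 0) <= boxsum d n (fun m => F (mNl N m l)) <=
  boxsum d (n * N + N) (fun k => if in_classb d N l k then F k else 0).
Proof.
  intros HN HF n.
  assert (E : boxsum d n (fun m => F (mNl N m l)) =
    cubesum d (- Z.of_nat n * Z.of_nat N) ((2 * n + 1) * N) (fun k => if in_classb d N l k then F k else 0)).
  { rewrite cubesum_restrict_class by apply l_grid.
    apply boxsum_ext. intros m Hm. rewrite mNl_below_mNl; auto. }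
  rewrite E, !boxsum_cubesum.
  assert (forall k, 0 <= (if in_classb d N l k then F k else 0)) by (intros; destruct in_classb; auto; lra).
  split; apply cubesum_subcube; auto; rewrite ?Nat2Z.inj_add, ?Nat2Z.inj_mul; lia.
Qed.

Lemma class_reindex_nonneg F B : (forall k, 0 <= F k) ->
  (forall n, boxsum d n (fun k => if in_classb d N l k then F k else 0) <= B) ->
  exists L : R, is_lim_seq (fun n => boxsum d n (fun k => if in_classb d N l k then F k else 0)) L /\
    is_lim_seq (fun n => boxsum d n (fun m => F (mNl N m l))) L.
Proof.
  intros HF HB. destruct d as [|d'] eqn:Ed.
  - exists (F (fun _ => 0%Z)). simpl. split; [apply is_lim_seq_const|].
    replace (mNl N (fun _ => 0%Z) l) with (fun _ : nat => 0%Z); [apply is_lim_seq_const|].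
    apply functional_extensionality; intros i. unfold mNl. destruct l_grid as [_ Hl]. rewrite Hl by lia. lia.
  - rewrite <- Ed in *.
    assert (HN : (0 < N)%nat) by (destruct l_grid as [Hl _]; specialize (Hl O); lia).
    set (P := fun n => boxsum d n (fun k => if in_classb d N l k then F k else 0)).
    assert (Hinc : forall n, P n <= P (S n)) by (intros; apply boxsum_le_S; intros; destruct in_classb; auto; lra).
    destruct (ex_finite_lim_seq_incr P B Hinc HB) as [L HL].
    exists L. split; auto.
    apply is_lim_seq_le_le with (u := fun n => P (n * N)%nat) (w := fun n => P (n * N + N)%nat).
    + apply boxsum_mNl_squeeze; auto.
    + apply (is_lim_seq_subseq P L (fun n => n * N)%nat); auto. apply eventually_subseq; intros; nia.
    + apply (is_lim_seq_subseq P L (fun n => n * N + N)%nat); auto. apply eventually_subseq; intros; nia.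
Qed.

(* Write F = (A + F) - A with both parts nonnegative. *)
Lemma is_lim_seq_class_reindex F A : (forall k, Rabs (F k) <= A k) -> ex_finite_lim_seq (fun n => boxsum d n A) ->
  is_lim_seq (fun n => boxsum d n (fun m => F (mNl N m l)))
    (RsumZd d (fun k => if in_classb d N l k then F k else 0)).
Proof.
  intros HFA [LA HA].
  assert (A0 : forall k, 0 <= A k) by (intros k; specialize (HFA k); pose proof (Rabs_pos (F k)); lra).
  assert (Hp : forall k, 0 <= A k + F k) by (intros k; specialize (HFA k); apply Rabs_le_between in HFA; lra).
  pose proof (boxsum_le_lim d A LA A0 HA) as HAle.
  destruct (class_reindex_nonneg A LA A0) as [L1 [H1 H1']].
  { intros n. eapply Rle_trans; [|apply (HAle n)]. apply boxsum_le. intros; destruct in_classb; auto; lra. }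
  destruct (class_reindex_nonneg (fun k => A k + F k) (2 * LA) Hp) as [L2 [H2 H2']].
  { intros n. apply Rle_trans with (boxsum d n (fun k => 2 * A k)).
    - apply boxsum_le. intros k. specialize (HFA k); apply Rabs_le_between in HFA. destruct in_classb; lra.
    - rewrite boxsum_scal. pose proof (HAle n). lra. }
  assert (HL : is_lim_seq (fun n => boxsum d n (fun k => if in_classb d N l k then F k else 0)) (L2 - L1)).
  { apply (is_lim_seq_ext (fun n => boxsum d n (fun k => if in_classb d N l k then A k + F k else 0) -
       boxsum d n (fun k => if in_classb d N l k then A k else 0))).
    - intros n. rewrite <- boxsum_minus. apply boxsum_ext; intros; destruct in_classb; ring.
    - apply is_lim_seq_minus'; auto. }
  rewrite (RsumZd_unique _ _ _ HL).
  apply (is_lim_seq_ext (fun n => boxsum d n (fun m => A (mNl N m l) + F (mNl N m l)) -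
       boxsum d n (fun m => A (mNl N m l)))).
  - intros n. rewrite <- boxsum_minus. apply boxsum_ext; intros; ring.
  - apply is_lim_seq_minus'; auto.
Qed.

End ClassReindex.

Fixpoint zerob (d : nat) (k : nat -> Z) : bool :=
  match d with O => true | S d' => zerob d' k && Z.eqb (k d') 0 end.

Lemma zerob_ext d v w : (forall i, (i < d)%nat -> (v i = 0%Z <-> w i = 0%Z)) -> zerob d v = zerob d w.
Proof.
  induction d; simpl; intros H; auto. rewrite IHd by (intros; apply H; lia).
  destruct (Z.eqb_spec (v d) 0), (Z.eqb_spec (w d) 0); auto; exfalso; specialize (H d ltac:(lia)); tauto.
Qed.

Lemma zerob_false d v i : (i < d)%nat -> v i <> 0%Z -> zerob d v = false.
Proof.
  induction d; intros Hi Hv; [lia|]. simpl. destruct (Nat.eq_dec i d).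
  - subst. destruct (Z.eqb_spec (v d) 0); [lia|]. apply Bool.andb_false_r.
  - rewrite IHd; auto. lia.
Qed.

Definition depends_below (d : nat) (v : (nat -> Z) -> R) :=
  forall m m', (forall i, (i < d)%nat -> m i = m' i) -> v m = v m'.

Lemma boxsum_delta d n (m0 : nat -> Z) v : depends_below d v ->
  (forall i, (i < d)%nat -> (Z.abs (m0 i) <= Z.of_nat n)%Z) ->
  boxsum d n (fun m => if zerob d (fun i => (m i - m0 i)%Z) then v m else 0) = v m0.
Proof.
  revert v; induction d as [|d IH]; intros v Hv Hb; [apply Hv; intros; lia|].
  rewrite boxsum_S.
  rewrite (rsum_ext _ _ (fun i => if Nat.eqb i (Z.to_nat (m0 d + Z.of_nat n)) then v m0 else 0)).
  { apply rsum_indicator. specialize (Hb d ltac:(lia)). lia. }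
  intros i Hi. set (w := (Z.of_nat i - Z.of_nat n)%Z).
  replace (fun k => if zerob (S d) (fun i0 => (updZ k d w i0 - m0 i0)%Z) then v (updZ k d w) else 0) with
    (fun k => if Z.eqb (w - m0 d) 0 then (if zerob d (fun i0 => (k i0 - m0 i0)%Z) then v (updZ k d w) else 0) else 0).
  2:{ apply functional_extensionality; intros k. simpl zerob. rewrite updZ_same.
      rewrite (zerob_ext d (fun i0 => (updZ k d w i0 - m0 i0)%Z) (fun i0 => (k i0 - m0 i0)%Z))
        by (intros; rewrite updZ_other by lia; tauto).
      destruct (zerob d _), (Z.eqb _ 0); auto. }
  specialize (Hb d ltac:(lia)) as Hbd.
  destruct (Z.eqb_spec (w - m0 d) 0); destruct (Nat.eqb_spec i (Z.to_nat (m0 d + Z.of_nat n)));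
    try (exfalso; unfold w in *; lia).
  - rewrite (IH (fun k => v (updZ k d w))).
    + apply Hv. intros j Hj. unfold updZ. destruct (Nat.eqb_spec j d); subst; auto. lia.
    + intros m m' Hm. apply Hv. intros j Hj. unfold updZ. destruct (Nat.eqb_spec j d); auto. apply Hm; lia.
    + intros; apply Hb; lia.
  - apply boxsum_0.
Qed.

Lemma RsumZd_delta d (m0 : nat -> Z) v : depends_below d v ->
  RsumZd d (fun m => if zerob d (fun i => (m i - m0 i)%Z) then v m else 0) = v m0.
Proof.
  intros Hv.
  assert (Hn : exists n, forall i, (i < d)%nat -> (Z.abs (m0 i) <= Z.of_nat n)%Z).
  { clear Hv. induction d as [|d [n Hn]]; [exists O; intros; lia|].
    exists (Nat.max n (Z.to_nat (Z.abs (m0 d)))). intros i Hi.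
    destruct (Nat.eq_dec i d); [subst; lia|]. specialize (Hn i ltac:(lia)). lia. }
  destruct Hn as [n0 Hn0]. apply RsumZd_unique.
  apply (is_lim_seq_incr_n _ n0), (is_lim_seq_ext (fun _ => v m0)); [|apply is_lim_seq_const].
  intros n. symmetry. apply boxsum_delta; auto. intros i Hi. specialize (Hn0 i Hi). lia.
Qed.

Fixpoint tintegrable (d : nat) (f : (nat -> R) -> R) : Prop :=
  match d with
  | O => True
  | S d' => (forall t, tintegrable d' (fun x => f (updR x d' t))) /\
            ex_RInt (fun t => tint d' (fun x => f (updR x d' t))) (- PI) PI
  end.

Definition is_tint (d : nat) (f : (nat -> R) -> R) (v : R) : Prop :=
  tintegrable d f /\ tint d f = v.

Lemma tint_S d f : tint (S d) f = / (2 * PI) * RInt (fun t => tint d (fun x => f (updR x d t))) (- PI) PI.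
Proof. reflexivity. Qed.

Lemma is_tint_lin d f g a b : tintegrable d f -> tintegrable d g ->
  is_tint d (fun x => a * f x + b * g x) (a * tint d f + b * tint d g).
Proof.
  revert f g; induction d as [|d IH]; intros f g Hf Hg; [split; simpl; auto|].
  destruct Hf as [Hf1 Hf2], Hg as [Hg1 Hg2].
  assert (E : forall t, tint d (fun x => a * f (updR x d t) + b * g (updR x d t)) =
       a * tint d (fun x => f (updR x d t)) + b * tint d (fun x => g (updR x d t)))
    by (intros t; apply (IH _ _ (Hf1 t) (Hg1 t))).
  assert (Hex : ex_RInt (fun t => a * tint d (fun x => f (updR x d t)) + b * tint d (fun x => g (updR x d t))) (- PI) PI)
    by (apply (ex_RInt_plus (V := R_NormedModule)); apply (ex_RInt_scal (V := R_NormedModule)); auto).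
  split; [split|].
  - intros t. apply (IH _ _ (Hf1 t) (Hg1 t)).
  - eapply ex_RInt_ext; [|apply Hex]. intros; simpl; rewrite E; auto.
  - rewrite !tint_S, (RInt_ext _ _ _ _ (fun t _ => E t)).
    rewrite (RInt_plus (V := R_CompleteNormedModule)) by (apply (ex_RInt_scal (V := R_NormedModule)); auto).
    rewrite !(RInt_scal (V := R_CompleteNormedModule)) by auto.
    unfold scal, plus; simpl; unfold mult; simpl. ring.
Qed.

Lemma is_tint_scal d f a : tintegrable d f -> is_tint d (fun x => a * f x) (a * tint d f).
Proof.
  intros H. destruct (is_tint_lin d f f a 0 H H) as [H1 H2].
  replace (fun x => a * f x) with (fun x => a * f x + 0 * f x) by (apply functional_extensionality; intros; ring).
  split; auto. rewrite H2; ring.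
Qed.

Lemma is_tint_const d c : is_tint d (fun _ => c) c.
Proof.
  induction d as [|d [H1 H2]]; [split; simpl; auto|]. split.
  - split; auto. simpl. rewrite H2. apply ex_RInt_const.
  - rewrite tint_S, (RInt_ext _ (fun _ => c)) by (intros; apply H2).
    rewrite RInt_const. unfold scal; simpl; unfold mult; simpl. pose proof PI_RGT_0. field. lra.
Qed.

Lemma tint_abs_le d f e : tintegrable d f -> (forall x, Rabs (f x) <= e) -> Rabs (tint d f) <= e.
Proof.
  revert f; induction d as [|d IH]; intros f Hf Hb; [simpl; auto|].
  destruct Hf as [Hf1 Hf2]. rewrite tint_S. pose proof PI_RGT_0.
  assert (Rabs (RInt (fun t => tint d (fun x => f (updR x d t))) (- PI) PI) <= (PI - - PI) * e)
    by (apply abs_RInt_le_const; [lra|auto|intros; apply IH; auto]).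
  assert (0 < / (2 * PI)) by (apply Rinv_0_lt_compat; lra).
  rewrite Rabs_mult, Rabs_right by lra.
  apply Rle_trans with (/ (2 * PI) * ((PI - - PI) * e)); [apply Rmult_le_compat_l; lra|].
  right. field. lra.
Qed.

Lemma filterlim_fct_unif (hs : nat -> R -> R) (h : R -> R) :
  (forall eps, 0 < eps -> exists N0, forall n, (N0 <= n)%nat -> forall t, Rabs (hs n t - h t) <= eps) ->
  filterlim hs eventually (@locally (fct_UniformSpace R R_UniformSpace) h).
Proof.
  intros H P [eps HP]. destruct (H (eps / 2)) as [N0 HN]; [destruct eps; simpl; lra|].
  exists N0. intros n Hn. apply HP. intros t. specialize (HN n Hn t).
  change (Rabs (hs n t - h t) < eps). destruct eps; simpl in *; lra.
Qed.

Definition unif_cvg (fs : nat -> (nat -> R) -> R) (f : (nat -> R) -> R) : Prop :=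
  forall eps, 0 < eps -> exists N0, forall n, (N0 <= n)%nat -> forall x, Rabs (fs n x - f x) <= eps.

Lemma tint_unif_cvg d fs f : (forall n, tintegrable d (fs n)) -> unif_cvg fs f ->
  tintegrable d f /\ is_lim_seq (fun n => tint d (fs n)) (tint d f).
Proof.
  revert fs f; induction d as [|d IH]; intros fs f Hi Hu.
  - split; [exact I|]. apply is_lim_seq_spec. intros eps.
    destruct (Hu (eps / 2)) as [N0 HN]; [destruct eps; simpl; lra|].
    exists N0. intros n Hn. specialize (HN n Hn (fun _ => 0)). destruct eps; simpl in *; lra.
  - assert (Ht : forall t, tintegrable d (fun x => f (updR x d t)) /\
       is_lim_seq (fun n => tint d (fun x => fs n (updR x d t))) (tint d (fun x => f (updR x d t)))).
    { intros t. apply IH; [intros n; apply (Hi n)|].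
      intros eps He. destruct (Hu eps He) as [N0 HN]. exists N0; intros; apply HN; auto. }
    assert (Hu2 : forall eps, 0 < eps -> exists N0, forall n, (N0 <= n)%nat -> forall t,
       Rabs (tint d (fun x => fs n (updR x d t)) - tint d (fun x => f (updR x d t))) <= eps).
    { intros eps He. destruct (Hu eps He) as [N0 HN]. exists N0. intros n Hn t.
      destruct (is_tint_lin d (fun x => fs n (updR x d t)) (fun x => f (updR x d t)) 1 (-1)) as [HI HE];
        [apply (Hi n)|apply Ht|].
      replace (tint d (fun x => fs n (updR x d t)) - tint d (fun x => f (updR x d t))) with
        (tint d (fun x => 1 * fs n (updR x d t) + -1 * f (updR x d t))) by (rewrite HE; ring).
      apply tint_abs_le; auto. intros x.
      replace (1 * fs n (updR x d t) + -1 * f (updR x d t)) with (fs n (updR x d t) - f (updR x d t)) by ring.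
      apply HN; auto. }
    destruct (filterlim_RInt (V := R_CompleteNormedModule) (fun n t => tint d (fun x => fs n (updR x d t)))
       (- PI) PI eventually _ (fun t => tint d (fun x => f (updR x d t)))
       (fun n => RInt (fun t => tint d (fun x => fs n (updR x d t))) (- PI) PI)) as [If [HIf1 HIf2]].
    { intros n. apply (RInt_correct (V := R_CompleteNormedModule)). apply (Hi n). }
    { apply filterlim_fct_unif. auto. }
    split.
    + split; [intros t; apply Ht|]. exists If; auto.
    + rewrite tint_S, (is_RInt_unique _ _ _ _ HIf2).
      apply (is_lim_seq_scal_l _ (/ (2 * PI)) If). auto.
Qed.

Lemma is_tint_rsum d n (F : nat -> (nat -> R) -> R) : (forall i, tintegrable d (F i)) ->
  is_tint d (fun x => rsum n (fun i => F i x)) (rsum n (fun i => tint d (F i))).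
Proof.
  intros H. induction n as [|n [H1 H2]]; [apply (is_tint_const d 0)|].
  destruct (is_tint_lin d _ _ 1 1 H1 (H n)) as [H3 H4].
  replace (fun x => rsum (S n) (fun i => F i x)) with (fun x => 1 * rsum n (fun i => F i x) + 1 * F n x)
    by (apply functional_extensionality; intros; simpl; ring).
  split; auto. rewrite H4, H2. simpl. ring.
Qed.

Lemma is_tint_boxsum d e n (u : (nat -> Z) -> (nat -> R) -> R) : (forall m, tintegrable d (u m)) ->
  is_tint d (fun x => boxsum e n (fun m => u m x)) (boxsum e n (fun m => tint d (u m))).
Proof.
  revert u; induction e as [|e IH]; intros u H; [split; simpl; auto|].
  destruct (is_tint_rsum d (2 * n + 1) (fun i x => boxsum e n (fun k => u (updZ k e (Z.of_nat i - Z.of_nat n)%Z) x)))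
    as [H1 H2]; [intros i; apply IH; auto|].
  split; [exact H1|]. etransitivity; [exact H2|]. rewrite boxsum_S. apply rsum_ext. intros i _. apply IH; auto.
Qed.

(* A dominated series of integrable functions converges uniformly, so it can be integrated term by term. *)
Lemma is_tint_RsumZd d e (u : (nat -> Z) -> (nat -> R) -> R) A : (forall m, tintegrable d (u m)) ->
  (forall m x, Rabs (u m x) <= A m) -> ex_finite_lim_seq (fun n => boxsum e n A) ->
  is_tint d (fun x => RsumZd e (fun m => u m x)) (RsumZd e (fun m => tint d (u m))).
Proof.
  intros Hi Hb [LA HA].
  destruct (tint_unif_cvg d (fun n x => boxsum e n (fun m => u m x)) (fun x => RsumZd e (fun m => u m x))) as [H1 H2].
  - intros n. apply is_tint_boxsum; auto.
  - intros eps He. pose proof HA as HA'. apply is_lim_seq_spec in HA'. destruct (HA' (mkposreal eps He)) as [N0 HN0].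
    exists N0. intros n Hn x.
    destruct (boxsum_dominated_cvg e (fun m => u m x) A (fun m => Hb m x) LA HA) as [L [HL1 HL2]].
    rewrite (RsumZd_unique _ _ _ HL1). eapply Rle_trans; [apply HL2|].
    specialize (HN0 n Hn). simpl in HN0. apply Rabs_lt_between in HN0. lra.
  - split; auto.
    assert (Hc : is_lim_seq (fun n => boxsum e n (fun m => tint d (u m))) (RsumZd e (fun m => tint d (u m)))).
    { apply is_lim_seq_RsumZd_dominated with A; [|exists LA; auto].
      intros m. apply tint_abs_le; auto. }
    apply (is_lim_seq_ext _ (fun n => boxsum e n (fun m => tint d (u m)))) in H2;
      [|intros n; apply is_tint_boxsum; auto].
    apply is_lim_seq_unique in H2. apply is_lim_seq_unique in Hc. rewrite H2 in Hc. injection Hc; auto.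
Qed.

(** * Orthogonality of characters *)

Lemma is_RInt_cos_linear (j : Z) a :
  is_RInt (fun t => cos (IZR j * t + a)) (- PI) PI (if Z.eqb j 0 then 2 * PI * cos a else 0).
Proof.
  destruct (Z.eqb_spec j 0) as [->|Hj0].
  - replace (2 * PI * cos a) with (scal (PI - - PI) (cos a)) by (unfold scal; simpl; unfold mult; simpl; ring).
    apply (is_RInt_ext (V := R_NormedModule) (fun _ => cos a)); [intros; simpl; f_equal; ring|].
    apply (is_RInt_const (V := R_NormedModule)).
  - assert (Hj : IZR j <> 0) by (apply not_0_IZR; auto).
    replace 0 with (minus (sin (IZR j * PI + a) / IZR j) (sin (IZR j * - PI + a) / IZR j)).
    + apply (is_RInt_derive (fun t => sin (IZR j * t + a) / IZR j)).
      * intros t _. auto_derive; auto. field. auto.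
      * intros t _. apply (ex_derive_continuous (fun t => cos (IZR j * t + a))). auto_derive. auto.
    + unfold minus, plus, opp; simpl.
      replace (IZR j * PI + a) with (a + IZR j * PI) by ring.
      replace (IZR j * - PI + a) with (a - IZR j * PI) by ring.
      rewrite sin_plus, sin_minus, sin_IZR_PI. field. auto.
Qed.

Lemma is_tint_cos_dotZ d k a :
  is_tint d (fun x => cos (dotZ d k x + a)) (if zerob d k then cos a else 0).
Proof.
  revert a; induction d as [|d IH]; intros a.
  - split; [exact I|]. unfold dotZ; simpl. f_equal; ring.
  - assert (E : forall t, (fun x => cos (dotZ (S d) k (updR x d t) + a)) = (fun x => cos (dotZ d k x + (IZR (k d) * t + a))))
      by (intros t; apply functional_extensionality; intros x; rewrite dotZ_S_updR; f_equal; ring).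
    assert (HI : is_RInt (fun t => tint d (fun x => cos (dotZ (S d) k (updR x d t) + a))) (- PI) PI
       (if zerob d k then (if Z.eqb (k d) 0 then 2 * PI * cos a else 0) else 0)).
    { apply (is_RInt_ext (V := R_NormedModule) (fun t => if zerob d k then cos (IZR (k d) * t + a) else 0)).
      - intros t _. rewrite E. symmetry. apply IH.
      - destruct (zerob d k); [apply is_RInt_cos_linear|].
        pose proof (is_RInt_const (V := R_NormedModule) (- PI) PI 0) as H0.
        replace (scal (PI - - PI) (0 : R_NormedModule)) with 0 in H0 by (unfold scal; simpl; unfold mult; simpl; ring).
        exact H0. }
    split; [split|].
    + intros t. rewrite E. apply IH.
    + eexists; eauto.
    + rewrite tint_S, (is_RInt_unique _ _ _ _ HI). simpl zerob. pose proof PI_RGT_0.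
      destruct (zerob d k), (Z.eqb (k d) 0); simpl; field; lra.
Qed.

Definition to_Z (l : nat -> nat) : nat -> Z := fun i => Z.of_nat (l i).

Lemma in_classb_0_sub d N l k :
  in_classb d N (fun _ => O) (fun i => (to_Z l i - k i)%Z) = in_classb d N l k.
Proof.
  induction d as [|d IH]; simpl; auto. rewrite IH. f_equal. unfold to_Z.
  rewrite Z.sub_0_r.
  destruct (Nat.eq_dec N 0) as [->|HN].
  - simpl Z.of_nat. rewrite !Zmod_0_r. destruct (Z.eqb_spec (Z.of_nat (l d) - k d) 0), (Z.eqb_spec (k d - Z.of_nat (l d)) 0); lia.
  - replace (Z.of_nat (l d) - k d)%Z with (- (k d - Z.of_nat (l d)))%Z by ring.
    destruct (Z.eqb_spec ((k d - Z.of_nat (l d)) mod Z.of_nat N) 0) as [E|E].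
    + apply Z.eqb_eq. apply Z.mod_opp_l_z; auto; lia.
    + apply Z.eqb_neq. intros E'. apply E. rewrite <- (Z.opp_involutive (k d - _)). apply Z.mod_opp_l_z; auto; lia.
Qed.

Lemma gridsum_S d N F : gridsum (S d) N F = rsum N (fun t => gridsum d N (fun p => F (updN p d t))).
Proof. reflexivity. Qed.

Lemma gridsum_ext d N F H : (forall p, F p = H p) -> gridsum d N F = gridsum d N H.
Proof. intros E. replace F with H; auto. symmetry; apply functional_extensionality; auto. Qed.

Lemma gridsum_scal d N a F : gridsum d N (fun p => a * F p) = a * gridsum d N F.
Proof. revert F; induction d; intros; simpl; auto. rewrite <- rsum_scal. apply rsum_ext; intros; apply IHd. Qed.

Lemma gridsum_plus d N F H : gridsum d N (fun p => F p + H p) = gridsum d N F + gridsum d N H.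
Proof. revert F H; induction d; intros; simpl; auto. rewrite <- rsum_plus. apply rsum_ext; intros; apply IHd. Qed.

Lemma gridsum_rsum d N n (F : (nat -> nat) -> nat -> R) :
  gridsum d N (fun p => rsum n (fun i => F p i)) = rsum n (fun i => gridsum d N (fun p => F p i)).
Proof.
  induction n; simpl rsum.
  - transitivity (0 * gridsum d N (fun _ => 0)); [|ring].
    rewrite <- gridsum_scal. apply gridsum_ext; intros; ring.
  - rewrite gridsum_plus, IHn. auto.
Qed.

Lemma gridsum_boxsum d N e n (T : (nat -> nat) -> (nat -> Z) -> R) :
  gridsum d N (fun p => boxsum e n (fun k => T p k)) = boxsum e n (fun k => gridsum d N (fun p => T p k)).
Proof.
  revert T; induction e; intros T; simpl; auto.
  rewrite gridsum_rsum. apply rsum_ext. intros; apply IHe.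
Qed.

Lemma is_lim_seq_gridsum d N (u : nat -> (nat -> nat) -> R) (v : (nat -> nat) -> R) :
  (forall p, is_lim_seq (fun m => u m p) (v p)) -> is_lim_seq (fun m => gridsum d N (u m)) (gridsum d N v).
Proof.
  revert u v; induction d as [|d IH]; intros u v H; simpl; auto.
  apply is_lim_seq_rsum. intros t. apply IH. intros; apply H.
Qed.

Lemma gridpt_updN N p d t : gridpt N (updN p d t) = updR (gridpt N p) d (2 * PI / INR N * INR t - PI).
Proof. apply functional_extensionality; intros i. unfold gridpt, updN, updR. destruct (Nat.eqb i d); auto. Qed.

Lemma grid_nonempty d N l : in_grid d N l -> (0 < N)%nat \/ d = O.
Proof. intros [H _]. destruct d; auto. left. specialize (H O). lia. Qed.

(* If N divides j every phase is a multiple of 2 pi (N being even); otherwise the sum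
   telescopes against sin at the half-integer points. *)
Lemma rsum_grid_cos N (j : Z) a : Nat.Even N -> (0 < N)%nat ->
  rsum N (fun t => cos (IZR j * (2 * PI / INR N * INR t - PI) + a)) =
  if Z.eqb (j mod Z.of_nat N) 0 then INR N * cos a else 0.
Proof.
  intros [h Hh] HN. assert (HNR : INR N <> 0) by (apply not_0_INR; lia).
  destruct (Z.eqb_spec (j mod Z.of_nat N) 0) as [E|E].
  - apply Z.mod_divide in E; [|lia]. destruct E as [q Hq].
    rewrite <- rsum_const. apply rsum_ext. intros t _.
    replace (IZR j * (2 * PI / INR N * INR t - PI) + a) with (a + 2 * PI * IZR (q * Z.of_nat t - q * Z.of_nat h));
      [apply cos_plus_2kPI|].
    rewrite Hq, minus_IZR, !mult_IZR, <- !INR_IZR_INZ, Hh, mult_INR. replace (INR 2) with 2 by (simpl; ring).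
    field. intros Hc; apply HNR; rewrite Hh, mult_INR, Hc; ring.
  - set (th := 2 * PI * IZR j / INR N). set (be := a - IZR j * PI).
    rewrite (rsum_ext _ _ (fun t => cos (th * INR t + be))) by (intros; f_equal; unfold th, be; field; auto).
    assert (Hs : sin (th / 2) <> 0).
    { intros Hs. apply sin_eq_0_0 in Hs. destruct Hs as [k Hk]. apply E.
      assert (IZR j = IZR (k * Z.of_nat N)).
      { rewrite mult_IZR, <- INR_IZR_INZ. unfold th in Hk. pose proof PI_RGT_0.
        replace (IZR j) with ((2 * PI * IZR j / INR N / 2) * INR N / PI) by (field; repeat split; auto; lra).
        rewrite Hk. field. lra. }
      apply eq_IZR in H. rewrite H. apply Z_mod_mult. }
    set (g := fun t : nat => sin (th * (INR t - / 2) + be)).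
    assert (Hg : forall t, g (S t) - g t = 2 * sin (th / 2) * cos (th * INR t + be)).
    { intros t. unfold g. rewrite S_INR, form4.
      replace ((th * (INR t + 1 - / 2) + be + (th * (INR t - / 2) + be)) / 2) with (th * INR t + be) by field.
      replace ((th * (INR t + 1 - / 2) + be - (th * (INR t - / 2) + be)) / 2) with (th / 2) by field. ring. }
    assert (Htel : rsum N (fun t => g (S t) - g t) = 0).
    { rewrite rsum_telescope. unfold g. simpl INR.
      replace (th * (INR N - / 2) + be) with ((th * (0 - / 2) + be) + 2 * PI * IZR j) by (unfold th; field; auto).
      rewrite sin_plus_2kPI. ring. }
    rewrite (rsum_ext _ _ (fun t => 2 * sin (th / 2) * cos (th * INR t + be))) in Htel by (intros; apply Hg).
    rewrite rsum_scal in Htel. apply Rmult_integral in Htel. destruct Htel; auto. lra.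
Qed.

Lemma gridsum_cos_dotZ d N (j : nat -> Z) a : Nat.Even N -> (0 < N)%nat \/ d = O ->
  gridsum d N (fun p => cos (dotZ d j (gridpt N p) + a)) =
  if in_classb d N (fun _ => O) j then INR N ^ d * cos a else 0.
Proof.
  intros HE HN. revert a; induction d as [|d IH]; intros a.
  - simpl. unfold dotZ; simpl. rewrite Rplus_0_l; ring.
  - assert (HN0 : (0 < N)%nat) by (destruct HN; [auto|discriminate]).
    rewrite gridsum_S.
    rewrite (rsum_ext _ _ (fun t => (if in_classb d N (fun _ => O) j then INR N ^ d else 0) *
       cos (IZR (j d) * (2 * PI / INR N * INR t - PI) + a))).
    + rewrite rsum_scal, rsum_grid_cos by auto. simpl in_classb. rewrite Z.sub_0_r.
      destruct (in_classb d N _ j), (Z.eqb _ 0); simpl; ring.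
    + intros t _.
      rewrite (gridsum_ext _ _ _ (fun p => cos (dotZ d j (gridpt N p) + (IZR (j d) * (2 * PI / INR N * INR t - PI) + a)))).
      * rewrite IH by auto. destruct in_classb; ring.
      * intros p. rewrite gridpt_updN, dotZ_S_updR. f_equal. ring.
Qed.

(** * Reduction to the torus and aliasing on the grid *)

Lemma rmod_bounds a b : 0 < b -> 0 <= rmod a b < b.
Proof.
  intros Hb. unfold rmod. destruct (base_Int_part (a / b)) as [H1 H2].
  set (z := IZR (Int_part (a / b))) in *.
  assert (b * z <= a).
  { apply (Rmult_le_compat_l b) in H1; [|lra]. replace (b * (a / b)) with a in H1 by (field; lra). auto. }
  assert (a < b * z + b).
  { assert (a / b < z + 1) by lra. apply (Rmult_lt_compat_l b) in H0; [|lra].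
    replace (b * (a / b)) with a in H0 by (field; lra). lra. }
  lra.
Qed.

Lemma tmod_in_torus d v : in_torus d (tmod d v).
Proof.
  intros i Hi. unfold tmod. rewrite (proj2 (Nat.ltb_lt i d) Hi). pose proof PI_RGT_0.
  pose proof (rmod_bounds (v i + PI) (2 * PI) ltac:(lra)). lra.
Qed.

Lemma dotZ_tmod d k v : exists z : Z, dotZ d k (tmod d v) = dotZ d k v + 2 * PI * IZR z.
Proof.
  unfold dotZ.
  assert (forall e, (e <= d)%nat -> exists z,
    rsum e (fun i => IZR (k i) * tmod d v i) = rsum e (fun i => IZR (k i) * v i) + 2 * PI * IZR z).
  { induction e as [|e IH]; intros He; [exists 0%Z; simpl; ring|].
    destruct IH as [z Hz]; [lia|]. rewrite !rsum_S, Hz.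
    exists (z - k e * Int_part ((v e + PI) / (2 * PI)))%Z.
    unfold tmod. rewrite (proj2 (Nat.ltb_lt e d)) by lia. unfold rmod.
    rewrite minus_IZR, mult_IZR. ring. }
  apply H; lia.
Qed.

Lemma dotZ_mNl_gridpt d N m l p : Nat.Even N -> (0 < N)%nat \/ d = O ->
  exists z, dotZ d (mNl N m l) (gridpt N p) = dotZ d (to_Z l) (gridpt N p) + 2 * PI * IZR z.
Proof.
  intros [h Hh] [HN | ->]; [|exists 0%Z; unfold dotZ; simpl; ring].
  unfold dotZ. induction d as [|d [z Hz]]; [exists 0%Z; simpl; ring|].
  rewrite !rsum_S, Hz. exists (z + m d * (Z.of_nat (p d) - Z.of_nat h))%Z.
  unfold mNl, to_Z, gridpt. rewrite !plus_IZR, !mult_IZR, minus_IZR, <- !INR_IZR_INZ.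
  assert (E : INR N = 2 * INR h) by (rewrite Hh, mult_INR; simpl; ring).
  assert (INR N <> 0) by (apply not_0_INR; lia). rewrite E in *. field. lra.
Qed.

Lemma dotZ_gridpt_origin d l N : exists z, dotZ d (to_Z l) (gridpt N (fun _ => O)) = IZR z * PI.
Proof.
  unfold dotZ. induction d as [|d [z Hz]]; [exists 0%Z; simpl; ring|].
  rewrite rsum_S, Hz. exists (z - to_Z l d)%Z. unfold gridpt. rewrite minus_IZR. simpl INR. ring.
Qed.

Lemma in_classb_mNl d N m k l : in_grid d N k -> in_grid d N l ->
  in_classb d N l (mNl N m k) = true -> forall i, (i < d)%nat -> k i = l i.
Proof.
  intros [Hk _] [Hl _] H i Hi. rewrite in_classb_spec in H. specialize (H i Hi).
  specialize (Hk i Hi). specialize (Hl i Hi). unfold mNl in H.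
  replace (m i * Z.of_nat N + Z.of_nat (k i) - Z.of_nat (l i))%Z
    with ((Z.of_nat (k i) - Z.of_nat (l i)) + m i * Z.of_nat N)%Z in H by ring.
  rewrite Z.mod_add in H by lia. apply Z.mod_divide in H; [|lia]. destruct H as [q Hq].
  assert (q = 0%Z) by nia. subst. lia.
Qed.

Lemma in_classb_mNl_same d N m l : in_classb d N l (mNl N m l) = true.
Proof.
  apply in_classb_spec. intros i _. unfold mNl.
  replace (m i * Z.of_nat N + Z.of_nat (l i) - Z.of_nat (l i))%Z with (m i * Z.of_nat N)%Z by ring.
  apply Z_mod_mult.
Qed.

Lemma RsumZd_lin d u v a b : is_lim_seq (fun n => boxsum d n u) (RsumZd d u) ->
  is_lim_seq (fun n => boxsum d n v) (RsumZd d v) ->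
  RsumZd d (fun k => a * u k + b * v k) = a * RsumZd d u + b * RsumZd d v.
Proof.
  intros Hu Hv. apply RsumZd_unique.
  apply (is_lim_seq_ext (fun n => a * boxsum d n u + b * boxsum d n v)).
  - intros n. rewrite boxsum_plus, !boxsum_scal. auto.
  - apply is_lim_seq_plus'; apply (is_lim_seq_scal_l _ _ (Finite _)); auto.
Qed.

Section Eigenfunctions.

Variables (d N : nat) (g : (nat -> R) -> R) (M : nat -> nat -> R) (G : (nat -> Z) -> R).
Hypothesis N_even : Nat.Even N.
Hypothesis G_nonneg : forall k, 0 <= G k.
Hypothesis G_summable : ex_finite_lim_seq (fun n => boxsum d n G).
Hypothesis G_depends_below : depends_below d G.
Hypothesis K_expansion : forall th, in_torus d th ->
  RtoC (g (matvec d M th)) = CsumZd d (fun k => Cmult (RtoC (G k)) (phi d k th)).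
Hypothesis K_invertible : kernel_matrix_invertible d N (kern d g M).

Lemma kern_series x y :
  kern d g M x y = RsumZd d (fun k => G k * cos (dotZ d k (fun i => x i - y i))) /\
  RsumZd d (fun k => G k * sin (dotZ d k (fun i => x i - y i))) = 0.
Proof.
  set (v := fun i => x i - y i).
  pose proof (K_expansion _ (tmod_in_torus d v)) as H.
  unfold CsumZd, RtoC in H. injection H as Hre Him. unfold kern. fold v. split.
  - rewrite Hre. apply RsumZd_ext. intros k. unfold phi, cexpi; simpl.
    destruct (dotZ_tmod d k v) as [z ->]. rewrite cos_plus_2kPI. ring.
  - etransitivity; [|symmetry; exact Him]. apply RsumZd_ext. intros k. unfold phi, cexpi; simpl.
    destruct (dotZ_tmod d k v) as [z ->]. rewrite sin_plus_2kPI. ring.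
Qed.

Lemma is_lim_seq_G_weighted u : (forall k, Rabs (u k) <= 1) ->
  is_lim_seq (fun n => boxsum d n (fun k => G k * u k)) (RsumZd d (fun k => G k * u k)).
Proof. intros Hu. apply is_lim_seq_RsumZd_dominated with G; auto. intros; apply Rabs_scale_le; auto. Qed.

Lemma is_lim_seq_kern_mul_cos x y b :
  is_lim_seq (fun n => boxsum d n (fun k => G k * cos (dotZ d k (fun i => x i - y i) + b))) (kern d g M x y * cos b).
Proof.
  destruct (kern_series x y) as [Hc Hs].
  apply (is_lim_seq_ext (fun n => boxsum d n (fun k => G k * cos (dotZ d k (fun i => x i - y i))) * cos b
      - boxsum d n (fun k => G k * sin (dotZ d k (fun i => x i - y i))) * sin b)).
  - intros n. rewrite (Rmult_comm _ (cos b)), (Rmult_comm _ (sin b)), <- !boxsum_scal, <- boxsum_minus.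
    apply boxsum_ext. intros k _. rewrite cos_plus. ring.
  - replace (kern d g M x y * cos b) with
      (RsumZd d (fun k => G k * cos (dotZ d k (fun i => x i - y i))) * cos b -
       RsumZd d (fun k => G k * sin (dotZ d k (fun i => x i - y i))) * sin b) by (rewrite Hc, Hs; ring).
    apply is_lim_seq_minus'; apply (is_lim_seq_scal_r _ _ (Finite _)), is_lim_seq_G_weighted;
      intros; auto using Rabs_cos_le, Rabs_sin_le.
Qed.

Lemma Re_psi l x : fst (psi d N G l x) =
  / sqrt (Gl1 d N G l) * RsumZd d (fun m => G (mNl N m l) * cos (dotZ d (mNl N m l) x)).
Proof.
  unfold psi, CsumZd. simpl fst. rewrite Rmult_0_l, Rminus_0_r. f_equal.
  apply RsumZd_ext. intros m. unfold Re, phi, cexpi. simpl. ring.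
Qed.

Lemma Im_psi l x : snd (psi d N G l x) =
  / sqrt (Gl1 d N G l) * RsumZd d (fun m => G (mNl N m l) * sin (dotZ d (mNl N m l) x)).
Proof.
  unfold psi, CsumZd. simpl snd. rewrite Rmult_0_l, Rplus_0_r. f_equal.
  apply RsumZd_ext. intros m. unfold Im, phi, cexpi. simpl. ring.
Qed.

Section Index.

Variable l : nat -> nat.
Hypothesis l_grid : in_grid d N l.

Lemma is_lim_seq_Gl1 : is_lim_seq (fun n => boxsum d n (fun m => G (mNl N m l))) (Gl1 d N G l).
Proof.
  assert (HGG : forall k, Rabs (G k) <= G k) by (intros; rewrite Rabs_pos_eq; auto; lra).
  pose proof (is_lim_seq_class_reindex d N l l_grid G G HGG G_summable) as H.
  unfold Gl1. rewrite (RsumZd_ext _ _ (fun m => G (mNl N m l))) by (intros; apply Rabs_pos_eq; auto).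
  rewrite (RsumZd_unique _ _ _ H). exact H.
Qed.

Lemma Gl1_class_sum : Gl1 d N G l = RsumZd d (fun k => if in_classb d N l k then G k else 0).
Proof.
  assert (HGG : forall k, Rabs (G k) <= G k) by (intros; rewrite Rabs_pos_eq; auto; lra).
  pose proof (is_lim_seq_class_reindex d N l l_grid G G HGG G_summable) as H.
  exact (is_lim_seq_Req _ _ _ is_lim_seq_Gl1 H).
Qed.

Lemma Gl1_nonneg : 0 <= Gl1 d N G l.
Proof.
  apply (is_lim_seq_Rle (fun _ => 0) (fun n => boxsum d n (fun m => G (mNl N m l))));
    [intros; apply boxsum_nonneg; auto|apply is_lim_seq_const|apply is_lim_seq_Gl1].
Qed.

Lemma is_lim_seq_Gl_weighted u : (forall m, Rabs (u m) <= 1) ->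
  is_lim_seq (fun n => boxsum d n (fun m => G (mNl N m l) * u m)) (RsumZd d (fun m => G (mNl N m l) * u m)).
Proof.
  intros Hu. apply is_lim_seq_RsumZd_dominated with (fun m => G (mNl N m l)).
  - intros; apply Rabs_scale_le; auto.
  - eexists; apply is_lim_seq_Gl1.
Qed.

Lemma RsumZd_Gl_weighted_abs_le u : (forall m, Rabs (u m) <= 1) ->
  Rabs (RsumZd d (fun m => G (mNl N m l) * u m)) <= Gl1 d N G l.
Proof.
  intros Hu. apply RsumZd_abs_le with (fun m => G (mNl N m l)).
  - intros; apply Rabs_scale_le; auto.
  - apply is_lim_seq_Gl1.
Qed.

Lemma psi_gridpt p :
  fst (psi d N G l (gridpt N p)) = / sqrt (Gl1 d N G l) * Gl1 d N G l * cos (dotZ d (to_Z l) (gridpt N p)) /\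
  snd (psi d N G l (gridpt N p)) = / sqrt (Gl1 d N G l) * Gl1 d N G l * sin (dotZ d (to_Z l) (gridpt N p)).
Proof.
  rewrite Re_psi, Im_psi, !Rmult_assoc.
  split; f_equal; apply RsumZd_unique;
    [apply (is_lim_seq_ext (fun n => boxsum d n (fun m => G (mNl N m l)) * cos (dotZ d (to_Z l) (gridpt N p))))
    |apply (is_lim_seq_ext (fun n => boxsum d n (fun m => G (mNl N m l)) * sin (dotZ d (to_Z l) (gridpt N p))))];
    try (apply (is_lim_seq_scal_r _ _ (Finite _)), is_lim_seq_Gl1);
    intros n; rewrite Rmult_comm, <- boxsum_scal; apply boxsum_ext; intros m _;
    destruct (dotZ_mNl_gridpt d N m l p N_even (grid_nonempty _ _ _ l_grid)) as [z ->];
    rewrite ?cos_plus_2kPI, ?sin_plus_2kPI; ring.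
Qed.

Lemma gridsum_kern_cos x a :
  gridsum d N (fun p => kern d g M x (gridpt N p) * cos (dotZ d (to_Z l) (gridpt N p) + a)) =
  INR N ^ d * RsumZd d (fun m => G (mNl N m l) * cos (dotZ d (mNl N m l) x + a)).
Proof.
  set (T := fun p k => G k * cos (dotZ d k (fun i => x i - gridpt N p i) + (dotZ d (to_Z l) (gridpt N p) + a))).
  set (H := fun k => if in_classb d N l k then G k * cos (dotZ d k x + a) else 0).
  assert (Hgrid : forall k, gridsum d N (fun p => T p k) = INR N ^ d * H k).
  { intros k. unfold T, H. rewrite gridsum_scal.
    rewrite (gridsum_ext _ _ _ (fun p => cos (dotZ d (fun i => (to_Z l i - k i)%Z) (gridpt N p) + (dotZ d k x + a)))).
    - rewrite gridsum_cos_dotZ, in_classb_0_sub by (auto; apply (grid_nonempty _ _ _ l_grid)).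
      destruct in_classb; ring.
    - intros p. f_equal. rewrite dotZ_minus_l, dotZ_minus_r. ring. }
  assert (HG : forall k, Rabs (G k * cos (dotZ d k x + a)) <= G k) by (intros; apply Rabs_scale_le; auto using Rabs_cos_le).
  rewrite (RsumZd_unique _ _ _ (is_lim_seq_class_reindex d N l l_grid _ G HG G_summable)). fold H.
  apply (is_lim_seq_Req (fun n => INR N ^ d * boxsum d n H)).
  - apply (is_lim_seq_ext (fun n => gridsum d N (fun p => boxsum d n (T p)))).
    + intros n. rewrite gridsum_boxsum, <- boxsum_scal. apply boxsum_ext; intros; apply Hgrid.
    + apply is_lim_seq_gridsum. intros p. apply is_lim_seq_kern_mul_cos.
  - apply (is_lim_seq_scal_l _ _ (Finite _)), is_lim_seq_RsumZd_dominated with G; auto.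
    intros k. unfold H. destruct in_classb; auto. rewrite Rabs_R0; auto.
Qed.

Lemma TK_psi x : TK d N (kern d g M) (psi d N G l) x = Cmult (RtoC (Gl1 d N G l)) (psi d N G l x).
Proof.
  assert (HNd : INR N ^ d <> 0).
  { destruct (grid_nonempty _ _ _ l_grid) as [HN | ->]; [apply pow_nonzero, not_0_INR; lia|simpl; lra]. }
  set (c := / sqrt (Gl1 d N G l)). set (L1 := Gl1 d N G l).
  unfold TK, Cgridsum. apply injective_projections; rewrite ?Cmult_fst, ?Cmult_snd; cbn [fst snd RtoC].
  - rewrite (gridsum_ext _ _ _ (fun p => c * L1 * (kern d g M x (gridpt N p) * cos (dotZ d (to_Z l) (gridpt N p) + 0)))).
    + rewrite gridsum_scal, gridsum_kern_cos, Re_psi. fold c L1.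
      rewrite (RsumZd_ext _ _ (fun m => G (mNl N m l) * cos (dotZ d (mNl N m l) x))) by (intros; rewrite Rplus_0_r; auto).
      field. auto.
    + intros p. unfold Re. rewrite Cmult_fst. cbn [fst snd RtoC]. rewrite (proj1 (psi_gridpt p)), Rplus_0_r.
      fold c L1. ring.
  - rewrite (gridsum_ext _ _ _ (fun p => c * L1 * (kern d g M x (gridpt N p) * cos (dotZ d (to_Z l) (gridpt N p) + - (PI / 2))))).
    + rewrite gridsum_scal, gridsum_kern_cos, Im_psi. fold c L1.
      rewrite (RsumZd_ext _ _ (fun m => G (mNl N m l) * sin (dotZ d (mNl N m l) x))) by (intros; rewrite cos_minus_PI2; auto).
      field. auto.
    + intros p. unfold Im. rewrite Cmult_snd. cbn [fst snd RtoC]. rewrite (proj2 (psi_gridpt p)), cos_minus_PI2.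
      fold c L1. ring.
Qed.

(* Were ||G_l||_1 zero, the kernel matrix would annihilate q |-> cos <l, x_q>, which is +-1 at the origin. *)
Lemma Gl1_pos : 0 < Gl1 d N G l.
Proof.
  destruct (Rle_lt_or_eq_dec _ _ Gl1_nonneg) as [H|H]; auto. exfalso.
  assert (Hz : forall x, RsumZd d (fun m => G (mNl N m l) * cos (dotZ d (mNl N m l) x + 0)) = 0).
  { intros x. apply Rabs_eq_0. apply Rle_antisym; [|apply Rabs_pos]. rewrite H.
    apply RsumZd_Gl_weighted_abs_le. intros; apply Rabs_cos_le. }
  assert (Horigin : in_grid d N (fun _ => O)).
  { split; auto. intros i Hi. destruct (grid_nonempty _ _ _ l_grid); lia. }
  assert (Hcos : cos (dotZ d (to_Z l) (gridpt N (fun _ => O)) + 0) = 0).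
  { apply (K_invertible (fun q => cos (dotZ d (to_Z l) (gridpt N q) + 0))); auto.
    intros p _. rewrite gridsum_kern_cos, Hz. ring. }
  destruct (dotZ_gridpt_origin d l N) as [z Ez]. rewrite Ez, Rplus_0_r in Hcos.
  pose proof (sin2_cos2 (IZR z * PI)) as E. rewrite sin_IZR_PI, Hcos in E. unfold Rsqr in E. lra.
Qed.

Lemma psi_bound x :
  Rabs (fst (psi d N G l x)) <= / sqrt (Gl1 d N G l) * Gl1 d N G l /\
  Rabs (snd (psi d N G l x)) <= / sqrt (Gl1 d N G l) * Gl1 d N G l.
Proof.
  pose proof (Rinv_sqrt_nonneg (Gl1 d N G l)).
  rewrite Re_psi, Im_psi, !Rabs_mult, (Rabs_pos_eq (/ _)) by lra.
  split; apply Rmult_le_compat_l, RsumZd_Gl_weighted_abs_le; auto; intros; auto using Rabs_cos_le, Rabs_sin_le.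
Qed.

Lemma Re_psi_mul_conj_phi j x : fst (Cmult (psi d N G l x) (Cconj (phi d j x))) =
  RsumZd d (fun m => / sqrt (Gl1 d N G l) * G (mNl N m l) * cos (dotZ d (fun i => (mNl N m l i - j i)%Z) x + 0)).
Proof.
  set (c := / sqrt (Gl1 d N G l)). set (tj := dotZ d j x).
  rewrite Cmult_fst. unfold Cconj, phi, cexpi. cbn [fst snd]. rewrite Re_psi, Im_psi. fold c tj.
  rewrite (RsumZd_ext _ (fun m => c * G (mNl N m l) * cos (dotZ d (fun i => (mNl N m l i - j i)%Z) x + 0))
    (fun m => (c * cos tj) * (G (mNl N m l) * cos (dotZ d (mNl N m l) x)) +
                                   (c * sin tj) * (G (mNl N m l) * sin (dotZ d (mNl N m l) x)))).
  - rewrite RsumZd_lin by (apply is_lim_seq_Gl_weighted; intros; auto using Rabs_cos_le, Rabs_sin_le). ring.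
  - intros m. rewrite dotZ_minus_l, Rplus_0_r, cos_minus. fold tj. ring.
Qed.

Lemma Im_psi_mul_conj_phi j x : snd (Cmult (psi d N G l x) (Cconj (phi d j x))) =
  RsumZd d (fun m => / sqrt (Gl1 d N G l) * G (mNl N m l) * cos (dotZ d (fun i => (mNl N m l i - j i)%Z) x + - (PI / 2))).
Proof.
  set (c := / sqrt (Gl1 d N G l)). set (tj := dotZ d j x).
  rewrite Cmult_snd. unfold Cconj, phi, cexpi. cbn [fst snd]. rewrite Re_psi, Im_psi. fold c tj.
  rewrite (RsumZd_ext _ (fun m => c * G (mNl N m l) * cos (dotZ d (fun i => (mNl N m l i - j i)%Z) x + - (PI / 2)))
    (fun m => (- c * sin tj) * (G (mNl N m l) * cos (dotZ d (mNl N m l) x)) +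
                                   (c * cos tj) * (G (mNl N m l) * sin (dotZ d (mNl N m l) x)))).
  - rewrite RsumZd_lin by (apply is_lim_seq_Gl_weighted; intros; auto using Rabs_cos_le, Rabs_sin_le). ring.
  - intros m. rewrite dotZ_minus_l, cos_minus_PI2, sin_minus. fold tj. ring.
Qed.

Lemma is_tint_Gl_series (t : (nat -> Z) -> (nat -> R) -> R) B :
  (forall m, tintegrable d (t m)) -> (forall m x, Rabs (t m x) <= B) ->
  is_tint d (fun x => RsumZd d (fun m => / sqrt (Gl1 d N G l) * G (mNl N m l) * t m x))
    (RsumZd d (fun m => / sqrt (Gl1 d N G l) * G (mNl N m l) * tint d (t m))).
Proof.
  intros Hti Htb. set (c := / sqrt (Gl1 d N G l)).
  assert (HcG : forall m, 0 <= c * G (mNl N m l)) by (intros; apply Rmult_le_pos; auto; apply Rinv_sqrt_nonneg).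
  rewrite (RsumZd_ext _ _ (fun m => tint d (fun x => c * G (mNl N m l) * t m x)))
    by (intros m; symmetry; apply is_tint_scal; auto).
  apply is_tint_RsumZd with (fun m => c * G (mNl N m l) * B).
  - intros m. apply is_tint_scal; auto.
  - intros m x. rewrite Rabs_mult, Rabs_pos_eq by auto. apply Rmult_le_compat_l; auto.
  - exists (c * Gl1 d N G l * B).
    apply (is_lim_seq_ext (fun n => c * boxsum d n (fun m => G (mNl N m l)) * B)).
    + intros n. rewrite <- boxsum_scal, Rmult_comm, <- boxsum_scal. apply boxsum_ext; intros; ring.
    + apply (is_lim_seq_scal_r _ _ (Finite _)), (is_lim_seq_scal_l _ _ (Finite _)), is_lim_seq_Gl1.
Qed.

Lemma Re_mul_conj_psi z x : fst (Cmult z (Cconj (psi d N G l x))) =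
  RsumZd d (fun m => / sqrt (Gl1 d N G l) * G (mNl N m l) * fst (Cmult z (Cconj (phi d (mNl N m l) x)))).
Proof.
  set (c := / sqrt (Gl1 d N G l)).
  rewrite Cmult_fst. unfold Cconj. cbn [fst snd]. rewrite Re_psi, Im_psi. fold c.
  rewrite (RsumZd_ext _ (fun m => c * G (mNl N m l) * fst (Cmult z (Cconj (phi d (mNl N m l) x))))
    (fun m => (c * fst z) * (G (mNl N m l) * cos (dotZ d (mNl N m l) x)) +
              (c * snd z) * (G (mNl N m l) * sin (dotZ d (mNl N m l) x)))).
  - rewrite RsumZd_lin by (apply is_lim_seq_Gl_weighted; intros; auto using Rabs_cos_le, Rabs_sin_le). ring.
  - intros m. rewrite Cmult_fst. unfold Cconj, phi, cexpi. cbn [fst snd]. ring.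
Qed.

Lemma Im_mul_conj_psi z x : snd (Cmult z (Cconj (psi d N G l x))) =
  RsumZd d (fun m => / sqrt (Gl1 d N G l) * G (mNl N m l) * snd (Cmult z (Cconj (phi d (mNl N m l) x)))).
Proof.
  set (c := / sqrt (Gl1 d N G l)).
  rewrite Cmult_snd. unfold Cconj. cbn [fst snd]. rewrite Re_psi, Im_psi. fold c.
  rewrite (RsumZd_ext _ (fun m => c * G (mNl N m l) * snd (Cmult z (Cconj (phi d (mNl N m l) x))))
    (fun m => (- c * fst z) * (G (mNl N m l) * sin (dotZ d (mNl N m l) x)) +
              (c * snd z) * (G (mNl N m l) * cos (dotZ d (mNl N m l) x)))).
  - rewrite RsumZd_lin by (apply is_lim_seq_Gl_weighted; intros; auto using Rabs_cos_le, Rabs_sin_le). ring.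
  - intros m. rewrite Cmult_snd. unfold Cconj, phi, cexpi. cbn [fst snd]. ring.
Qed.

Lemma RsumZd_mNl_delta c j :
  RsumZd d (fun m => c * G (mNl N m l) * (if zerob d (fun i => (mNl N m l i - j i)%Z) then 1 else 0)) =
  if in_classb d N l j then c * G j else 0.
Proof.
  destruct l_grid as [Hl _].
  destruct (in_classb d N l j) eqn:Ec.
  - rewrite in_classb_spec in Ec. set (m0 := fun i => ((j i - Z.of_nat (l i)) / Z.of_nat N)%Z).
    assert (Hm0 : forall i, (i < d)%nat -> (j i - Z.of_nat (l i) = Z.of_nat N * m0 i)%Z).
    { intros i Hi. specialize (Hl i Hi). apply Z.div_exact; [lia|]. apply Ec; auto. }
    rewrite (RsumZd_ext _ _ (fun m => if zerob d (fun i => (m i - m0 i)%Z) then c * G (mNl N m l) else 0)).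
    + rewrite RsumZd_delta; [f_equal; apply G_depends_below|].
      * intros i Hi. unfold mNl. specialize (Hm0 i Hi). lia.
      * intros m m' Hmm. f_equal. apply G_depends_below. intros i Hi. unfold mNl. rewrite Hmm; auto.
    + intros m. rewrite (zerob_ext d _ (fun i => (m i - m0 i)%Z)); [destruct zerob; ring|].
      intros i Hi. specialize (Hm0 i Hi). specialize (Hl i Hi). unfold mNl. split; intros; nia.
  - destruct (in_classb_false d N l j Ec) as [i [Hi Hm]].
    transitivity (RsumZd d (fun _ => 0)); [|apply RsumZd_0]. apply RsumZd_ext. intros m.
    rewrite (zerob_false d _ i Hi); [ring|]. unfold mNl. intros E. apply Hm.
    replace (j i - Z.of_nat (l i))%Z with (m i * Z.of_nat N)%Z by lia. apply Z_mod_mult.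
Qed.

Lemma is_tint_psi_mul_conj_phi j :
  is_tint d (fun x => fst (Cmult (psi d N G l x) (Cconj (phi d j x)))) (if in_classb d N l j then / sqrt (Gl1 d N G l) * G j else 0) /\
  is_tint d (fun x => snd (Cmult (psi d N G l x) (Cconj (phi d j x)))) 0.
Proof.
  set (c := / sqrt (Gl1 d N G l)).
  set (t := fun a m x => cos (dotZ d (fun i => (mNl N m l i - j i)%Z) x + a)).
  assert (Ht : forall a, is_tint d (fun x => RsumZd d (fun m => c * G (mNl N m l) * t a m x))
                 (RsumZd d (fun m => c * G (mNl N m l) * (if zerob d (fun i => (mNl N m l i - j i)%Z) then cos a else 0)))).
  { intros a. rewrite (RsumZd_ext _ _ (fun m => c * G (mNl N m l) * tint d (t a m)))
      by (intros m; f_equal; symmetry; apply is_tint_cos_dotZ).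
    apply is_tint_Gl_series with 1; [intros m; apply is_tint_cos_dotZ|intros; apply Rabs_cos_le]. }
  replace (fun x => fst (Cmult (psi d N G l x) (Cconj (phi d j x)))) with
    (fun x => RsumZd d (fun m => c * G (mNl N m l) * t 0 m x))
    by (apply functional_extensionality; intros x; symmetry; apply Re_psi_mul_conj_phi).
  replace (fun x => snd (Cmult (psi d N G l x) (Cconj (phi d j x)))) with
    (fun x => RsumZd d (fun m => c * G (mNl N m l) * t (- (PI / 2)) m x))
    by (apply functional_extensionality; intros x; symmetry; apply Im_psi_mul_conj_phi).
  split.
  - rewrite <- RsumZd_mNl_delta. pose proof (Ht 0) as H. rewrite cos_0 in H. exact H.
  - destruct (Ht (- (PI / 2))) as [H1 H2]. split; auto. rewrite H2, cos_neg, cos_PI2.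
    transitivity (RsumZd d (fun _ => 0)); [|apply RsumZd_0]. apply RsumZd_ext. intros; destruct zerob; ring.
Qed.

Lemma Hnorm_psi : Hnorm d G (psi d N G l) = 1.
Proof.
  pose proof Gl1_pos as Hpos. set (c := / sqrt (Gl1 d N G l)).
  unfold Hnorm.
  rewrite (RsumZd_ext _ _ (fun k => c * c * (if in_classb d N l k then G k else 0))).
  - rewrite RsumZd_scal, <- Gl1_class_sum. unfold c.
    rewrite <- Rinv_mult, sqrt_sqrt, Rinv_l by lra. apply sqrt_1.
  - intros k. unfold L2ip, Ctint, Re, Im.
    destruct (is_tint_psi_mul_conj_phi k) as [[_ T1] [_ T2]]. rewrite T1, T2. fold c.
    unfold Cmod. cbn [fst snd]. rewrite pow2_sqrt by (apply Rplus_le_le_0_compat; apply pow2_ge_0).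
    destruct in_classb; [|unfold Rdiv; ring].
    destruct (Req_dec (G k) 0) as [Z|Z]; [rewrite Z; unfold Rdiv; rewrite Rinv_0; ring|field; auto].
Qed.

End Index.

Lemma Rabs_lin_comb_le a b u v B : Rabs a <= B -> Rabs b <= B -> Rabs u <= 1 -> Rabs v <= 1 ->
  Rabs (a * u + b * v) <= 2 * B.
Proof.
  intros Ha Hb Hu Hv. eapply Rle_trans; [apply Rabs_triang|]. rewrite !Rabs_mult.
  assert (Rabs a * Rabs u <= B) by (apply Rle_trans with (B * 1); [apply Rmult_le_compat; auto using Rabs_pos|lra]).
  assert (Rabs b * Rabs v <= B) by (apply Rle_trans with (B * 1); [apply Rmult_le_compat; auto using Rabs_pos|lra]).
  lra.
Qed.

Lemma is_tint_mul_conj_psi k f B : in_grid d N k ->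
  (forall x, Rabs (fst (f x)) <= B /\ Rabs (snd (f x)) <= B) ->
  (forall j, tintegrable d (fun x => fst (Cmult (f x) (Cconj (phi d j x)))) /\
             tintegrable d (fun x => snd (Cmult (f x) (Cconj (phi d j x))))) ->
  is_tint d (fun x => fst (Cmult (f x) (Cconj (psi d N G k x))))
    (RsumZd d (fun m => / sqrt (Gl1 d N G k) * G (mNl N m k) * tint d (fun x => fst (Cmult (f x) (Cconj (phi d (mNl N m k) x)))))) /\
  is_tint d (fun x => snd (Cmult (f x) (Cconj (psi d N G k x))))
    (RsumZd d (fun m => / sqrt (Gl1 d N G k) * G (mNl N m k) * tint d (fun x => snd (Cmult (f x) (Cconj (phi d (mNl N m k) x)))))).
Proof.
  intros Hk Hf Hint.
  replace (fun x => fst (Cmult (f x) (Cconj (psi d N G k x)))) with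
    (fun x => RsumZd d (fun m => / sqrt (Gl1 d N G k) * G (mNl N m k) * fst (Cmult (f x) (Cconj (phi d (mNl N m k) x)))))
    by (apply functional_extensionality; intros x; symmetry; apply Re_mul_conj_psi; auto).
  replace (fun x => snd (Cmult (f x) (Cconj (psi d N G k x)))) with
    (fun x => RsumZd d (fun m => / sqrt (Gl1 d N G k) * G (mNl N m k) * snd (Cmult (f x) (Cconj (phi d (mNl N m k) x)))))
    by (apply functional_extensionality; intros x; symmetry; apply Im_mul_conj_psi; auto).
  split; apply is_tint_Gl_series with (2 * B); auto; try (intros; apply Hint);
    intros m x; rewrite ?Cmult_fst, ?Cmult_snd; unfold Cconj, phi, cexpi; cbn [fst snd].
  - replace (fst (f x) * cos (dotZ d (mNl N m k) x) - snd (f x) * - sin (dotZ d (mNl N m k) x))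
      with (fst (f x) * cos (dotZ d (mNl N m k) x) + snd (f x) * sin (dotZ d (mNl N m k) x)) by ring.
    apply Rabs_lin_comb_le; try apply Hf; auto using Rabs_cos_le, Rabs_sin_le.
  - replace (fst (f x) * - sin (dotZ d (mNl N m k) x) + snd (f x) * cos (dotZ d (mNl N m k) x))
      with (snd (f x) * cos (dotZ d (mNl N m k) x) + fst (f x) * - sin (dotZ d (mNl N m k) x)) by ring.
    apply Rabs_lin_comb_le; try apply Hf; auto using Rabs_cos_le. rewrite Rabs_Ropp. apply Rabs_sin_le.
Qed.

Lemma is_tint_psi_mul_conj_psi l k : in_grid d N l -> in_grid d N k ->
  is_tint d (fun x => fst (Cmult (psi d N G l x) (Cconj (psi d N G k x))))
    (RsumZd d (fun m => / sqrt (Gl1 d N G k) * G (mNl N m k) *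
       (if in_classb d N l (mNl N m k) then / sqrt (Gl1 d N G l) * G (mNl N m k) else 0))) /\
  is_tint d (fun x => snd (Cmult (psi d N G l x) (Cconj (psi d N G k x)))) 0.
Proof.
  intros Hl Hk.
  destruct (is_tint_mul_conj_psi k (psi d N G l) (/ sqrt (Gl1 d N G l) * Gl1 d N G l) Hk) as [[I1 T1] [I2 T2]].
  - intros x; apply psi_bound; auto.
  - intros j. split; apply (is_tint_psi_mul_conj_phi l Hl j).
  - split; split; auto.
    + rewrite T1. apply RsumZd_ext. intros m. f_equal. apply (is_tint_psi_mul_conj_phi l Hl).
    + rewrite T2. transitivity (RsumZd d (fun _ => 0)); [|apply RsumZd_0]. apply RsumZd_ext; intros m.
      rewrite (proj2 (proj2 (is_tint_psi_mul_conj_phi l Hl _))). ring.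
Qed.

Lemma L2norm_psi l : in_grid d N l -> L2norm d (psi d N G l) = Gl2 d N G l / sqrt (Gl1 d N G l).
Proof.
  intros Hl. destruct (is_tint_psi_mul_conj_psi l l Hl Hl) as [[_ T] _].
  unfold L2norm, Gl2.
  replace (fun x => Cmod (psi d N G l x) ^ 2) with (fun x => fst (Cmult (psi d N G l x) (Cconj (psi d N G l x)))).
  2:{ apply functional_extensionality; intros x. unfold Cmod.
      rewrite pow2_sqrt by (apply Rplus_le_le_0_compat; apply pow2_ge_0).
      rewrite Cmult_fst. unfold Cconj; cbn [fst snd]. ring. }
  rewrite T, (RsumZd_ext _ _ (fun m => (/ sqrt (Gl1 d N G l)) ^ 2 * Rabs (G (mNl N m l)) ^ 2)).
  2:{ intros m. rewrite in_classb_mNl_same, Rabs_pos_eq by auto. ring. }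
  rewrite RsumZd_scal, sqrt_mult_alt, sqrt_pow2 by (apply pow2_ge_0 || apply Rinv_sqrt_nonneg).
  unfold Rdiv. ring.
Qed.

Lemma L2ip_psi_orthogonal l k : in_grid d N l -> in_grid d N k -> (exists i, (i < d)%nat /\ k i <> l i) ->
  L2ip d (psi d N G l) (psi d N G k) = RtoC 0.
Proof.
  intros Hl Hk [i [Hi Hne]]. destruct (is_tint_psi_mul_conj_psi l k Hl Hk) as [[_ T1] [_ T2]].
  unfold L2ip, Ctint, Re, Im, RtoC. rewrite T1, T2. f_equal.
  transitivity (RsumZd d (fun _ => 0)); [|apply RsumZd_0]. apply RsumZd_ext. intros m.
  destruct (in_classb d N l (mNl N m k)) eqn:E; [|ring].
  exfalso. apply Hne. exact (in_classb_mNl d N m k l Hk Hl E i Hi).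
Qed.

End Eigenfunctions.

Lemma fourier_coef_depends_below d g M (G : (nat -> Z) -> R) :
  (forall k, RtoC (G k) = Ctint d (fun th => Cmult (RtoC (g (matvec d M th))) (cexpi (- dotZ d k th)))) ->
  depends_below d G.
Proof.
  intros HG k k' H. assert (E : RtoC (G k) = RtoC (G k')).
  { rewrite !HG. do 2 f_equal. apply functional_extensionality; intros th. rewrite (dotZ_ext d k k'); auto. }
  injection E; auto.
Qed.

Theorem lemma13 (d N : nat) (g : (nat -> R) -> R) (M : nat -> nat -> R)
  (G : (nat -> Z) -> R)
  (hN : Nat.Even N)
  (hG_fourier : forall k : nat -> Z,
     RtoC (G k) = Ctint d (fun th => Cmult (RtoC (g (matvec d M th))) (cexpi (- dotZ d k th))))
  (hG_nonneg : forall k : nat -> Z, 0 <= G k)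
  (hG_summable : ex_finite_lim_seq (fun n => boxsum d n G))
  (hK_expansion : forall th : nat -> R, in_torus d th ->
     RtoC (g (matvec d M th)) = CsumZd d (fun k => Cmult (RtoC (G k)) (phi d k th)))
  (hK_invertible : kernel_matrix_invertible d N (kern d g M)) :
  forall l : nat -> nat, in_grid d N l ->
    (forall x : nat -> R,
        TK d N (kern d g M) (psi d N G l) x = Cmult (RtoC (Gl1 d N G l)) (psi d N G l x))
    /\ Hnorm d G (psi d N G l) = 1
    /\ L2norm d (psi d N G l) = Gl2 d N G l / sqrt (Gl1 d N G l)
    /\ (forall k : nat -> nat, in_grid d N k -> (exists i, (i < d)%nat /\ k i <> l i) ->
          L2ip d (psi d N G l) (psi d N G k) = RtoC 0).
Proof.
  intros l Hl.
  pose proof (fourier_coef_depends_below d g M G hG_fourier) as HG.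
  split; [|split; [|split]].
  - intros x. apply TK_psi; auto.
  - apply Hnorm_psi with g M; auto.
  - apply L2norm_psi; auto.
  - intros k Hk Hne. apply L2ip_psi_orthogonal; auto.
Qed.
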